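(* Let $A=(a_{nk})$ be an infinite complex matrix and $1<p<\infty$. (i) $A\in(c_0^\lambda(\widehat B):\ell_p)$ if and only if: (a) $\sup_{F\in\mathcal F}\sum_n\left|\sum_{k\in F}\widehat g_{nk}\right|^p<\infty$; (b) $\sum_{j=k}^\infty d_{jk}a_{nj}$ converges for all fixed $k,n\in\mathbb{N}$; (c) $\sup_{m\in\mathbb{N}}\sum_{k=0}^{m-1}|\widehat g_{nk}(m)|<\infty$ for each $n$; (d) $\sup_k\left|\frac1r\frac{\lambda_k}{\lambda_k-\lambda_{k-1}}a_{nk}\right|<\infty$ for each $n\in\mathbb{N}$. (ii) $A\in(c_0^\lambda(\widehat B):\ell_\infty)$ if and only if condition (c), condition (d), and $\sup_{n\in\mathbb{N}}\sum_k|\widehat g_{nk}|<\infty$ hold.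
   Context: Fix nonzero reals $r,s,t$ and a strictly increasing sequence $\lambda=(\lambda_k)_{k\ge0}$ of positive reals with $\lambda_k\to\infty$. Convention: terms with negative subscript are $0$. $\omega$: all complex sequences indexed by $\mathbb{N}=\{0,1,\dots\}$; $\mathcal F$: finite subsets of $\mathbb{N}$. $D=(d_{nk})$ is the inverse of the lower triangular matrix $B(r,s,t)$ having $r$ on the diagonal, $s$ on the first subdiagonal, $t$ on the second subdiagonal and zeros elsewhere; explicitly $d_{nk}=\frac1r\sum_{v=0}^{n-k}\rho_1^{\,n-k-v}\rho_2^{\,v}$ ($0\le k\le n$), $d_{nk}=0$ ($k>n$), $\rho_{1,2}=\frac{-s\pm\sqrt{s^2-4tr}}{2r}$. With $\widehat W_n(x)=\frac{1}{\lambda_n}\sum_{k=0}^n(\lambda_k-\lambda_{k-1})(rx_k+sx_{k-1}+tx_{k-2})$, $c_0^\lambda(\widehat B)=\{x\in\omega:(\widehat W_n(x))_n\in c_0\}$. For $k<m$, $\widehat g_{nk}(m)=\lambda_k\left(\frac{1}{\lambda_k-\lambda_{k-1}}\sum_{j=k}^m d_{jk}a_{nj}-\frac{1}{\lambda_{k+1}-\lambda_k}\sum_{j=k+1}^m d_{j,k+1}a_{nj}\right)$, and $\widehat g_{nk}$ is the same with sums to $\infty$ (provided convergence). $A\in(X:Y)$ means that for every $x\in X$ the series $(Ax)_n=\sum_k a_{nk}x_k$ converges for each $n$ and $Ax\in Y$. *)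

From Stdlib Require Import Reals Lra List.
From Coquelicot Require Import Coquelicot.
Open Scope R_scope.

Fixpoint rsum (f : nat -> R) (m : nat) : R :=
  match m with O => 0 | S m' => rsum f m' + f m' end.
Fixpoint csum (f : nat -> C) (m : nat) : C :=
  match m with O => RtoC 0 | S m' => Cplus (csum f m') (f m') end.

(* Sum over a finite set F of naturals, represented by a duplicate-free list. *)
Definition csum_list (f : nat -> C) (F : list nat) : C :=
  fold_right (fun k acc => Cplus (f k) acc) (RtoC 0) F.

Definition CSeries (a : nat -> C) : C :=
  (Series (fun j => fst (a j)), Series (fun j => snd (a j))).

Definition powp (x p : R) : R := if Rle_dec x 0 then 0 else Rpower x p.

(* Convention: terms with negative subscript are 0. *)
Definition lam_m1 (lam : nat -> R) (k : nat) : R :=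
  match k with O => 0 | S k' => lam k' end.
Definition xsh (x : nat -> C) (i k : nat) : C :=
  if Nat.leb i k then x (k - i)%nat else RtoC 0.

(* D = (d_{nk}) = inverse of the lower triangular band matrix B(r,s,t).
   d_{nk} depends only on n-k: with e(0)=1/r, e(1)=-s/r^2 and
   r e(m+2) + s e(m+1) + t e(m) = 0 (forward substitution for B D = I). *)
Fixpoint dseq_aux (r s t : R) (m : nat) : R * R :=
  match m with
  | O => (/ r, - s / (r * r))
  | S m' => let '(u, v) := dseq_aux r s t m' in (v, - (s * v + t * u) / r)
  end.
Definition dseq (r s t : R) (m : nat) : R := fst (dseq_aux r s t m).
Definition dmat (r s t : R) (n k : nat) : R :=
  if Nat.leb k n then dseq r s t (n - k)%nat else 0.

Definition What (r s t : R) (lam : nat -> R) (x : nat -> C) (n : nat) : C :=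
  Cmult (RtoC (/ lam n))
    (csum (fun k => Cmult (RtoC (lam k - lam_m1 lam k))
          (Cplus (Cplus (Cmult (RtoC r) (x k)) (Cmult (RtoC s) (xsh x 1 k)))
                 (Cmult (RtoC t) (xsh x 2 k)))) (S n)).

Definition c0_lam_B (r s t : R) (lam : nat -> R) (x : nat -> C) : Prop :=
  is_lim_seq (fun n => Cmod (What r s t lam x n)) 0.

Definition Arow (a : nat -> nat -> C) (x : nat -> C) (n : nat) : nat -> C :=
  fun k => Cmult (a n k) (x k).
Definition Ax (a : nat -> nat -> C) (x : nat -> C) (n : nat) : C :=
  CSeries (Arow a x n).

Definition in_lp (p : R) (y : nat -> C) : Prop :=
  ex_series (fun n => powp (Cmod (y n)) p).
Definition in_linf (y : nat -> C) : Prop :=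
  exists M, forall n, Cmod (y n) <= M.

Definition maps_c0lamB_to (r s t : R) (lam : nat -> R) (a : nat -> nat -> C)
  (Y : (nat -> C) -> Prop) : Prop :=
  forall x, c0_lam_B r s t lam x ->
    (forall n, ex_series (Arow a x n)) /\ Y (Ax a x).

Definition dasum (r s t : R) (a : nat -> nat -> C) (n k m : nat) : C :=
  csum (fun i => Cmult (RtoC (dmat r s t (k + i) k)) (a n (k + i)%nat)) (S (m - k)).
Definition daterm (r s t : R) (a : nat -> nat -> C) (n k : nat) : nat -> C :=
  fun i => Cmult (RtoC (dmat r s t (k + i) k)) (a n (k + i)%nat).

Definition ghat_m (r s t : R) (lam : nat -> R) (a : nat -> nat -> C) (n k m : nat) : C :=
  Cmult (RtoC (lam k))
   (Cminus (Cmult (RtoC (/ (lam k - lam_m1 lam k))) (dasum r s t a n k m))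
           (Cmult (RtoC (/ (lam (S k) - lam k))) (dasum r s t a n (S k) m))).

(* \widehat g_{nk} (meaningful when the series converge, cf. cond_b) *)
Definition ghat (r s t : R) (lam : nat -> R) (a : nat -> nat -> C) (n k : nat) : C :=
  Cmult (RtoC (lam k))
   (Cminus (Cmult (RtoC (/ (lam k - lam_m1 lam k))) (CSeries (daterm r s t a n k)))
           (Cmult (RtoC (/ (lam (S k) - lam k))) (CSeries (daterm r s t a n (S k))))).

Definition cond_a (r s t : R) (lam : nat -> R) (a : nat -> nat -> C) (p : R) : Prop :=
  exists M, forall (F : list nat), NoDup F -> forall N,
    rsum (fun n => powp (Cmod (csum_list (ghat r s t lam a n) F)) p) N <= M.
Definition cond_b (r s t : R) (a : nat -> nat -> C) : Prop :=
  forall k n, ex_series (daterm r s t a n k).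
Definition cond_c (r s t : R) (lam : nat -> R) (a : nat -> nat -> C) : Prop :=
  forall n, exists M, forall m, rsum (fun k => Cmod (ghat_m r s t lam a n k m)) m <= M.
Definition cond_d (r : R) (lam : nat -> R) (a : nat -> nat -> C) : Prop :=
  forall n, exists M, forall k,
    Cmod (Cmult (RtoC (/ r * (lam k / (lam k - lam_m1 lam k)))) (a n k)) <= M.
Definition cond_e (r s t : R) (lam : nat -> R) (a : nat -> nat -> C) : Prop :=
  exists M, forall n N, rsum (fun k => Cmod (ghat r s t lam a n k)) N <= M.

Definition lam_ok (lam : nat -> R) : Prop :=
  (forall k, 0 < lam k) /\ (forall k, lam k < lam (S k)) /\ is_lim_seq lam p_infty.

From Stdlib Require Import Reals Lra Lia List Classical ClassicalEpsilon FunctionalExtensionality.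
From Coquelicot Require Import Coquelicot.
Open Scope R_scope.

(** Put [y = W(x)].  The map [x |-> W(x)] is a bijection of sequences, with inverse
    [x = D z], [z_k = (lam_k y_k - lam_{k-1} y_{k-1}) / (lam_k - lam_{k-1})]; hence
    [c_0^lam(B)] is the preimage of [c_0].  Summation by parts writes the m-th partial sum
    of [(Ax)_n] as [sum_{k<m} g_{nk}(m) y_k + lam_m a_{nm} y_m / (r (lam_m - lam_{m-1}))].

    Sufficiency: (b), (c), (d) are the hypotheses of a Toeplitz theorem on [c_0], which gives
    [(Ax)_n = sum_k g_{nk} y_k] with [sum_k |g_{nk}| < oo].  For [l_oo] the extra condition
    bounds these sums uniformly.  For [l_p], condition (a) bounds [sum_n |sum_k g_{nk} u_k|^p]
    at the vertices of the cube [[0,1]^K]; convexity of [t |-> t^p] extends the bound to the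
    whole cube, hence (splitting into real and imaginary, positive and negative parts) to
    the complex unit ball.

    Necessity: (b) comes from testing [A] on [x = D e_k].  The other conditions follow
    from the uniform boundedness principle on [c_0], proved by a gliding hump for families
    of quasi-seminorms, applied to the partial-sum functionals (giving (c), (d)), to the
    limit functionals (giving the [l_oo] condition) and to the quasi-norms
    [y |-> sum_{n<N} |sum_k g_{nk} y_k|^p] (giving (a), by evaluation at indicator vectors). *)


Lemma csum_ext_lt (f g : nat -> C) m :
  (forall k, (k < m)%nat -> f k = g k) -> csum f m = csum g m.
Proof.
  induction m as [|m IH]; intros H; simpl; auto.
  rewrite IH by (intros; apply H; lia). rewrite H by lia. reflexivity.
Qed.

Lemma rsum_ext_lt (f g : nat -> R) m :
  (forall k, (k < m)%nat -> f k = g k) -> rsum f m = rsum g m.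
Proof.
  induction m as [|m IH]; intros H; simpl; auto.
  rewrite IH by (intros; apply H; lia). rewrite H by lia. reflexivity.
Qed.

Lemma csum_0 m : csum (fun _ => RtoC 0) m = 0%C.
Proof. induction m as [|m IH]; simpl; auto. rewrite IH. ring. Qed.

Lemma csum_plus (f g : nat -> C) m :
  csum (fun k => f k + g k)%C m = (csum f m + csum g m)%C.
Proof. induction m as [|m IH]; simpl; [ring|]. rewrite IH. ring. Qed.

Lemma csum_scal (c : C) (f : nat -> C) m :
  csum (fun k => c * f k)%C m = (c * csum f m)%C.
Proof. induction m as [|m IH]; simpl; [ring|]. rewrite IH. ring. Qed.

Lemma csum_scal_r (f : nat -> C) (c : C) m :
  csum (fun k => f k * c)%C m = (csum f m * c)%C.
Proof. induction m as [|m IH]; simpl; [ring|]. rewrite IH. ring. Qed.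

Lemma csum_opp (f : nat -> C) m : csum (fun k => - f k)%C m = (- csum f m)%C.
Proof. induction m as [|m IH]; simpl; [ring|]. rewrite IH. ring. Qed.

Lemma csum_RtoC (f : nat -> R) m : csum (fun k => RtoC (f k)) m = RtoC (rsum f m).
Proof. induction m as [|m IH]; simpl; auto. rewrite IH, RtoC_plus. reflexivity. Qed.

Lemma csum_fst (f : nat -> C) m : fst (csum f m) = rsum (fun k => fst (f k)) m.
Proof. induction m as [|m IH]; simpl; congruence. Qed.

Lemma csum_snd (f : nat -> C) m : snd (csum f m) = rsum (fun k => snd (f k)) m.
Proof. induction m as [|m IH]; simpl; congruence. Qed.

Lemma csum_add (f : nat -> C) m n :
  csum f (m + n) = (csum f m + csum (fun k => f (m + k)%nat) n)%C.
Proof.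
  induction n as [|n IH]; simpl; [rewrite Nat.add_0_r; ring|].
  rewrite Nat.add_succ_r. simpl. rewrite IH. ring.
Qed.

Lemma rsum_add (f : nat -> R) m n :
  rsum f (m + n) = rsum f m + rsum (fun k => f (m + k)%nat) n.
Proof.
  induction n as [|n IH]; simpl; [rewrite Nat.add_0_r; ring|].
  rewrite Nat.add_succ_r. simpl. rewrite IH. ring.
Qed.

Lemma csum_swap (f : nat -> nat -> C) n m :
  csum (fun j => csum (fun i => f i j) m) n = csum (fun i => csum (fun j => f i j) n) m.
Proof.
  induction n as [|n IH]; simpl; [now rewrite csum_0|].
  rewrite IH, <- csum_plus. reflexivity.
Qed.

Lemma csum_vanishing_from (f : nat -> C) m n :
  (m <= n)%nat -> (forall k, (m <= k)%nat -> f k = 0%C) -> csum f n = csum f m.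
Proof.
  intros Hmn Hf. replace n with (m + (n - m))%nat by lia. rewrite csum_add.
  rewrite (csum_ext_lt (fun k => f (m + k)%nat) (fun _ => RtoC 0)) by (intros; apply Hf; lia).
  rewrite csum_0. ring.
Qed.

Lemma csum_vanishing_below (f : nat -> C) m n :
  (forall k, (k < m)%nat -> f k = 0%C) ->
  csum f (m + n) = csum (fun k => f (m + k)%nat) n.
Proof.
  intros Hf. rewrite csum_add, (csum_ext_lt _ (fun _ => RtoC 0) m) by auto.
  rewrite csum_0. ring.
Qed.

Lemma csum_single (f : nat -> C) i m :
  (i < m)%nat -> csum (fun k => if Nat.eqb k i then f k else 0%C) m = f i.
Proof.
  induction m as [|m IH]; intros Him; [lia|]. simpl.
  destruct (Nat.eqb_spec m i) as [->|Hne].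
  - rewrite (csum_ext_lt _ (fun _ => RtoC 0)), csum_0; [ring|].
    intros k Hk. destruct (Nat.eqb_spec k i); [lia | reflexivity].
  - rewrite IH by lia. ring.
Qed.

Lemma Cmod_csum_le (f : nat -> C) m : Cmod (csum f m) <= rsum (fun k => Cmod (f k)) m.
Proof.
  induction m as [|m IH]; simpl; [rewrite Cmod_R, Rabs_R0; lra|].
  eapply Rle_trans; [apply Cmod_triangle | lra].
Qed.

Lemma rsum_plus (f g : nat -> R) m : rsum (fun k => f k + g k) m = rsum f m + rsum g m.
Proof. induction m as [|m IH]; simpl; [ring|]. rewrite IH. ring. Qed.

Lemma rsum_scal (c : R) (f : nat -> R) m : rsum (fun k => c * f k) m = c * rsum f m.
Proof. induction m as [|m IH]; simpl; [ring|]. rewrite IH. ring. Qed.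

Lemma rsum_const (c : R) m : rsum (fun _ => c) m = INR m * c.
Proof. induction m as [|m IH]; [simpl; ring|]. simpl rsum. rewrite IH, S_INR. ring. Qed.

Lemma rsum_le (f g : nat -> R) m :
  (forall k, (k < m)%nat -> f k <= g k) -> rsum f m <= rsum g m.
Proof.
  induction m as [|m IH]; intros H; simpl; [lra|].
  pose proof (H m ltac:(lia)). pose proof (IH ltac:(intros; apply H; lia)). lra.
Qed.

Lemma rsum_nonneg (f : nat -> R) m : (forall k, 0 <= f k) -> 0 <= rsum f m.
Proof. intros H. induction m as [|m IH]; simpl; [lra|]. specialize (H m). lra. Qed.

Lemma rsum_Cmod_nonneg (f : nat -> C) m : 0 <= rsum (fun k => Cmod (f k)) m.
Proof. apply rsum_nonneg. intros; apply Cmod_ge_0. Qed.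

Lemma rsum_le_mono (f : nat -> R) m n : (forall k, 0 <= f k) -> (m <= n)%nat -> rsum f m <= rsum f n.
Proof. intros H Hmn. induction Hmn as [|n _ IH]; simpl; [lra|]. specialize (H n). lra. Qed.

Definition is_lim_Cseq (u : nat -> C) (l : C) : Prop :=
  forall eps, 0 < eps -> exists N, forall n, (N <= n)%nat -> Cmod (u n - l)%C < eps.

Lemma Cmod_le_Rabs_re_im (c : C) : Cmod c <= Rabs (fst c) + Rabs (snd c).
Proof.
  destruct c as [x y]. simpl.
  replace (x, y) with (x + y * Ci)%C by (apply injective_projections; simpl; ring).
  eapply Rle_trans; [apply Cmod_triangle|].
  rewrite Cmod_mult, Cmod_Ci, !Cmod_R. lra.
Qed.

Lemma Rabs_im_le_Cmod (c : C) : Rabs (snd c) <= Cmod c.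
Proof. eapply Rle_trans; [apply Rmax_r | apply Rmax_Cmod]. Qed.

Lemma is_lim_Cseq_re_im (u : nat -> C) (l : C) :
  is_lim_Cseq u l <->
  is_lim_seq (fun n => fst (u n)) (fst l) /\ is_lim_seq (fun n => snd (u n)) (snd l).
Proof.
  rewrite <- !is_lim_seq_spec. split.
  - intros H. split; intros eps; destruct (H eps (cond_pos eps)) as [N HN];
      exists N; intros n Hn; eapply Rle_lt_trans; try exact (HN n Hn).
    + exact (re_le_Cmod (u n - l)%C).
    + exact (Rabs_im_le_Cmod (u n - l)%C).
  - intros [H1 H2] eps Heps.
    destruct (H1 (pos_div_2 (mkposreal eps Heps))) as [N1 HN1].
    destruct (H2 (pos_div_2 (mkposreal eps Heps))) as [N2 HN2].
    exists (N1 + N2)%nat. intros n Hn.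
    eapply Rle_lt_trans; [apply Cmod_le_Rabs_re_im|].
    specialize (HN1 n ltac:(lia)). specialize (HN2 n ltac:(lia)). simpl in *. unfold Rminus in *. lra.
Qed.

Lemma is_lim_Cseq_const (c : C) : is_lim_Cseq (fun _ => c) c.
Proof.
  intros eps Heps. exists O. intros n _.
  replace (c - c)%C with (RtoC 0) by ring. rewrite Cmod_R, Rabs_R0. exact Heps.
Qed.

Lemma is_lim_Cseq_ext_eventually (u v : nat -> C) l :
  (exists N, forall n, (N <= n)%nat -> u n = v n) -> is_lim_Cseq u l -> is_lim_Cseq v l.
Proof.
  intros [M HM] H eps Heps. destruct (H eps Heps) as [N HN].
  exists (M + N)%nat. intros n Hn. rewrite <- HM by lia. apply HN. lia.
Qed.

Lemma is_lim_Cseq_ext (u v : nat -> C) l :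
  (forall n, u n = v n) -> is_lim_Cseq u l -> is_lim_Cseq v l.
Proof. intros E. apply is_lim_Cseq_ext_eventually. exists O. auto. Qed.

Lemma is_lim_Cseq_comp (u : nat -> C) l (f : nat -> nat) :
  (forall N, exists M, forall m, (M <= m)%nat -> (N <= f m)%nat) ->
  is_lim_Cseq u l -> is_lim_Cseq (fun m => u (f m)) l.
Proof.
  intros Hf H eps Heps. destruct (H eps Heps) as [N HN]. destruct (Hf N) as [M HM].
  exists M. intros m Hm. apply HN, HM, Hm.
Qed.

Lemma is_lim_Cseq_plus (u v : nat -> C) lu lv :
  is_lim_Cseq u lu -> is_lim_Cseq v lv -> is_lim_Cseq (fun n => u n + v n)%C (lu + lv)%C.
Proof.
  intros Hu Hv eps Heps.
  destruct (Hu (eps / 2)) as [N1 H1]; [lra|]. destruct (Hv (eps / 2)) as [N2 H2]; [lra|].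
  exists (N1 + N2)%nat. intros n Hn.
  replace (u n + v n - (lu + lv))%C with ((u n - lu) + (v n - lv))%C by ring.
  eapply Rle_lt_trans; [apply Cmod_triangle|].
  specialize (H1 n ltac:(lia)). specialize (H2 n ltac:(lia)). lra.
Qed.

Lemma is_lim_Cseq_scal (c : C) (u : nat -> C) l :
  is_lim_Cseq u l -> is_lim_Cseq (fun n => c * u n)%C (c * l)%C.
Proof.
  intros Hu eps Heps. pose proof (Cmod_ge_0 c).
  destruct (Hu (eps / (Cmod c + 1))) as [N HN]; [apply Rdiv_lt_0_compat; lra|].
  exists N. intros n Hn. specialize (HN n Hn).
  replace (c * u n - c * l)%C with (c * (u n - l))%C by ring. rewrite Cmod_mult.
  apply Rmult_lt_compat_l with (r := Cmod c + 1) in HN; [|lra].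
  replace ((Cmod c + 1) * (eps / (Cmod c + 1))) with eps in HN by (field; lra).
  pose proof (Cmod_ge_0 (u n - l)%C). nra.
Qed.

Lemma is_lim_Cseq_opp (u : nat -> C) l :
  is_lim_Cseq u l -> is_lim_Cseq (fun n => - u n)%C (- l)%C.
Proof.
  intros H. replace (- l)%C with (RtoC (-1) * l)%C by ring.
  apply (is_lim_Cseq_ext (fun n => RtoC (-1) * u n)%C); [intros; ring|].
  apply is_lim_Cseq_scal, H.
Qed.

Lemma is_lim_Cseq_minus (u v : nat -> C) lu lv :
  is_lim_Cseq u lu -> is_lim_Cseq v lv -> is_lim_Cseq (fun n => u n - v n)%C (lu - lv)%C.
Proof. intros Hu Hv. apply is_lim_Cseq_plus; [exact Hu | apply is_lim_Cseq_opp, Hv]. Qed.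

Lemma is_lim_Cseq_csum (f : nat -> nat -> C) (l : nat -> C) K :
  (forall k, (k < K)%nat -> is_lim_Cseq (fun m => f m k) (l k)) ->
  is_lim_Cseq (fun m => csum (f m) K) (csum l K).
Proof.
  induction K as [|K IH]; intros H; simpl; [apply is_lim_Cseq_const|].
  apply (is_lim_Cseq_plus (fun m => csum (f m) K) (fun m => f m K)).
  - apply IH. intros; apply H; lia.
  - apply H; lia.
Qed.

Lemma is_lim_Cseq_Cmod (u : nat -> C) l :
  is_lim_Cseq u l -> is_lim_seq (fun n => Cmod (u n)) (Cmod l).
Proof.
  intros H. apply is_lim_seq_spec. intros eps. destruct (H eps (cond_pos eps)) as [N HN].
  exists N. intros n Hn. specialize (HN n Hn). apply Rabs_def1.
  - pose proof (Cmod_triangle (u n - l)%C l). replace (u n - l + l)%C with (u n) in H0 by ring. lra.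
  - pose proof (Cmod_triangle (l - u n)%C (u n)). replace (l - u n + u n)%C with l in H0 by ring.
    replace (l - u n)%C with (- (u n - l))%C in H0 by ring. rewrite Cmod_opp in H0. lra.
Qed.

Lemma is_lim_Cseq_unique (u : nat -> C) l1 l2 : is_lim_Cseq u l1 -> is_lim_Cseq u l2 -> l1 = l2.
Proof.
  intros H1 H2. apply Ceq_minus, Cmod_eq_0.
  pose proof (is_lim_Cseq_minus u u l1 l2 H1 H2) as H.
  apply is_lim_Cseq_Cmod in H.
  apply (is_lim_seq_ext _ (fun _ => 0)) in H;
    [|intros; replace (u n - u n)%C with (RtoC 0) by ring; apply Cmod_0].
  apply is_lim_seq_unique in H. rewrite Lim_seq_const in H. injection H. auto.
Qed.

Lemma Cmod_le_of_lim (u : nat -> C) l B :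
  is_lim_Cseq u l -> (exists N, forall n, (N <= n)%nat -> Cmod (u n) <= B) -> Cmod l <= B.
Proof.
  intros H [N HN].
  apply (is_lim_seq_le_loc (fun n => Cmod (u n)) (fun _ => B) (Cmod l) B).
  - exists N. exact HN.
  - apply is_lim_Cseq_Cmod, H.
  - apply is_lim_seq_const.
Qed.

Lemma is_lim_Cseq_bounded (u : nat -> C) l : is_lim_Cseq u l -> exists B, forall n, Cmod (u n) <= B.
Proof.
  intros H. destruct (H 1 Rlt_0_1) as [N HN].
  assert (Hinit : forall K, exists B, forall n, (n < K)%nat -> Cmod (u n) <= B).
  { induction K as [|K [B HB]]; [exists 0; intros; lia|].
    exists (Rmax B (Cmod (u K))). intros n Hn. destruct (Nat.eq_dec n K) as [->|].
    - apply Rmax_r.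
    - eapply Rle_trans; [apply HB; lia | apply Rmax_l]. }
  destruct (Hinit N) as [B HB]. exists (Rmax B (Cmod l + 1)). intros n.
  destruct (Nat.lt_ge_cases n N) as [Hn|Hn].
  - eapply Rle_trans; [apply HB, Hn | apply Rmax_l].
  - eapply Rle_trans; [|apply Rmax_r]. specialize (HN n Hn).
    pose proof (Cmod_triangle (u n - l)%C l). replace (u n - l + l)%C with (u n) in H0 by ring. lra.
Qed.

Lemma sum_n_csum (f : nat -> C) n : sum_n f n = csum f (S n).
Proof.
  induction n as [|n IH].
  - rewrite sum_O. apply injective_projections; simpl; ring.
  - rewrite sum_Sn, IH. reflexivity.
Qed.

Lemma sum_n_rsum (f : nat -> R) n : sum_n f n = rsum f (S n).
Proof.
  induction n as [|n IH]; [rewrite sum_O; simpl; ring|]. rewrite sum_Sn, IH. reflexivity.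
Qed.

Lemma is_series_rsum (f : nat -> R) l : is_series f l <-> is_lim_seq (rsum f) l.
Proof.
  change (is_series f l) with (is_lim_seq (sum_n f) l).
  rewrite (is_lim_seq_incr_1 (rsum f)). split; apply is_lim_seq_ext; intros; now rewrite sum_n_rsum.
Qed.

Lemma is_series_csum (a : nat -> C) l : is_series a l <-> is_lim_Cseq (csum a) l.
Proof.
  unfold is_series. split.
  - intros H0 eps Heps.
    pose proof (proj1 (filterlim_locally (F := eventually) (sum_n a) l) H0) as H.
    destruct (H (pos_div_2 (mkposreal eps Heps))) as [N HN].
    exists (S N). intros [|n] Hn; [lia|]. destruct (HN n ltac:(lia)) as [B1 B2].
    rewrite sum_n_csum in B1, B2. eapply Rle_lt_trans; [apply Cmod_le_Rabs_re_im|].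
    change (Rabs (fst (csum a (S n)) - fst l) < eps / 2) in B1.
    change (Rabs (snd (csum a (S n)) - snd l) < eps / 2) in B2.
    change (Rabs (fst (csum a (S n)) - fst l) + Rabs (snd (csum a (S n)) - snd l) < eps).
    lra.
  - intros H. apply (filterlim_locally (F := eventually)). intros eps.
    destruct (H eps (cond_pos eps)) as [N HN]. exists N. intros n Hn.
    specialize (HN (S n) ltac:(lia)). rewrite sum_n_csum. split.
    + change (Rabs (fst (csum a (S n)) - fst l) < eps).
      eapply Rle_lt_trans; [apply (re_le_Cmod (csum a (S n) - l)%C) | exact HN].
    + change (Rabs (snd (csum a (S n)) - snd l) < eps).
      eapply Rle_lt_trans; [apply (Rabs_im_le_Cmod (csum a (S n) - l)%C) | exact HN].
Qed.

Lemma CSeries_unique (a : nat -> C) l : is_lim_Cseq (csum a) l -> CSeries a = l.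
Proof.
  rewrite is_lim_Cseq_re_im. intros [H1 H2]. unfold CSeries.
  destruct l as [l1 l2]. simpl in *. f_equal; apply is_series_unique, is_series_rsum.
  - apply (is_lim_seq_ext _ _ _ (csum_fst a) H1).
  - apply (is_lim_seq_ext _ _ _ (csum_snd a) H2).
Qed.

Lemma CSeries_correct (a : nat -> C) : ex_series a -> is_lim_Cseq (csum a) (CSeries a).
Proof.
  intros [l Hl]. apply is_series_csum in Hl. now rewrite (CSeries_unique a l Hl).
Qed.

Lemma ex_series_of_lim (a : nat -> C) l : is_lim_Cseq (csum a) l -> ex_series a.
Proof. intros H. exists l. apply is_series_csum, H. Qed.

Lemma ex_series_of_bounded_rsum (f : nat -> R) B :
  (forall k, 0 <= f k) -> (forall K, rsum f K <= B) -> ex_series f.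
Proof.
  intros H0 HB. destruct (ex_finite_lim_seq_incr (sum_n f) B) as [l Hl].
  - intros n. rewrite sum_Sn. specialize (H0 (S n)). unfold plus. simpl. lra.
  - intros n. rewrite sum_n_rsum. apply HB.
  - exists l. exact Hl.
Qed.

Definition l1_bounded (a : nat -> C) (B : R) : Prop := forall K, rsum (fun k => Cmod (a k)) K <= B.

Lemma ex_series_of_l1_bounded (a : nat -> C) B : l1_bounded a B -> ex_series a.
Proof.
  intros HB. apply (ex_series_le a (fun k => Cmod (a k))).
  - intros n. apply Req_le. reflexivity.
  - apply (ex_series_of_bounded_rsum _ B); [intros; apply Cmod_ge_0 | exact HB].
Qed.

Lemma rsum_le_Series (f : nat -> R) N : (forall n, 0 <= f n) -> ex_series f -> rsum f N <= Series f.
Proof.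
  intros H0 Hf. apply (is_lim_seq_le_loc (fun _ => rsum f N) (rsum f) (rsum f N) (Series f)).
  - exists N. intros n Hn. apply rsum_le_mono; auto.
  - apply is_lim_seq_const.
  - apply is_series_rsum, Series_correct, Hf.
Qed.

Definition c0 (y : nat -> C) : Prop := is_lim_seq (fun k => Cmod (y k)) 0.

Lemma c0_spec (y : nat -> C) :
  c0 y -> forall eps, 0 < eps -> exists N, forall k, (N <= k)%nat -> Cmod (y k) < eps.
Proof.
  intros H eps Heps. apply is_lim_seq_spec in H. destruct (H (mkposreal eps Heps)) as [N HN].
  exists N. intros k Hk. specialize (HN k Hk). simpl in HN.
  rewrite Rminus_0_r, Rabs_pos_eq in HN by apply Cmod_ge_0. exact HN.
Qed.

Lemma c0_intro (y : nat -> C) :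
  (forall eps, 0 < eps -> exists N, forall k, (N <= k)%nat -> Cmod (y k) <= eps) -> c0 y.
Proof.
  intros H. apply is_lim_seq_spec. intros eps.
  destruct (H (eps / 2)) as [N HN]; [apply Rdiv_lt_0_compat; [apply cond_pos | lra]|].
  exists N. intros k Hk. specialize (HN k Hk). pose proof (cond_pos eps).
  rewrite Rminus_0_r, Rabs_pos_eq by apply Cmod_ge_0. lra.
Qed.

Lemma c0_bounded (y : nat -> C) : c0 y -> exists B, 0 <= B /\ forall k, Cmod (y k) <= B.
Proof.
  intros H. destruct (is_lim_Cseq_bounded y 0%C) as [B HB].
  - intros eps Heps. destruct (c0_spec y H eps Heps) as [N HN]. exists N. intros k Hk.
    replace (y k - 0)%C with (y k) by ring. auto.
  - exists (Rabs B). split; [apply Rabs_pos|]. intros k. eapply Rle_trans; [apply HB | apply Rle_abs].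
Qed.

Lemma c0_plus (y z : nat -> C) : c0 y -> c0 z -> c0 (fun k => y k + z k)%C.
Proof.
  intros Hy Hz. apply c0_intro. intros eps Heps.
  destruct (c0_spec y Hy (eps / 2)) as [N1 H1]; [lra|].
  destruct (c0_spec z Hz (eps / 2)) as [N2 H2]; [lra|].
  exists (N1 + N2)%nat. intros k Hk. eapply Rle_trans; [apply Cmod_triangle|].
  specialize (H1 k ltac:(lia)). specialize (H2 k ltac:(lia)). lra.
Qed.

Lemma c0_opp (y : nat -> C) : c0 y -> c0 (fun k => - y k)%C.
Proof.
  intros Hy. apply c0_intro. intros eps Heps. destruct (c0_spec y Hy eps Heps) as [N HN].
  exists N. intros k Hk. rewrite Cmod_opp. left. auto.
Qed.

Lemma c0_finite (y : nat -> C) N : (forall k, (N <= k)%nat -> y k = 0%C) -> c0 y.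
Proof.
  intros H. apply c0_intro. intros eps Heps. exists N. intros k Hk.
  rewrite H by exact Hk. rewrite Cmod_0. lra.
Qed.

Lemma CSeries_finite (w : nat -> C) N : (forall k, (N <= k)%nat -> w k = 0%C) -> CSeries w = csum w N.
Proof.
  intros Hw. apply CSeries_unique.
  apply (is_lim_Cseq_ext_eventually (fun _ => csum w N)); [|apply is_lim_Cseq_const].
  exists N. intros n Hn. symmetry. apply csum_vanishing_from; auto.
Qed.

Lemma Cmod_csum_mul_le (g y : nat -> C) B eta K :
  l1_bounded g B -> (forall k, Cmod (y k) <= eta) ->
  Cmod (csum (fun k => g k * y k)%C K) <= B * eta.
Proof.
  intros HB Hy. pose proof (Cmod_ge_0 (y O)) as Heta. specialize (Hy O) as Hy0.
  eapply Rle_trans; [apply Cmod_csum_le|].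
  eapply Rle_trans; [apply (rsum_le _ (fun k => eta * Cmod (g k)))|].
  - intros k _. rewrite Cmod_mult, Rmult_comm. apply Rmult_le_compat_r; [apply Cmod_ge_0 | apply Hy].
  - rewrite rsum_scal, Rmult_comm. apply Rmult_le_compat_r; [lra | apply HB].
Qed.

Lemma ex_series_mul_c0 (g y : nat -> C) B :
  l1_bounded g B -> c0 y -> ex_series (fun k => g k * y k)%C.
Proof.
  intros HB Hy. destruct (c0_bounded y Hy) as [Y [_ HY]].
  apply (ex_series_of_l1_bounded _ (B * Y)). intros K.
  eapply Rle_trans; [apply (rsum_le _ (fun k => Y * Cmod (g k)))|].
  - intros k _. rewrite Cmod_mult, Rmult_comm. apply Rmult_le_compat_r; [apply Cmod_ge_0 | apply HY].
  - rewrite rsum_scal, Rmult_comm. apply Rmult_le_compat_r; [|apply HB].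
    eapply Rle_trans; [apply Cmod_ge_0 | apply (HY O)].
Qed.

(** * The band matrix B(r,s,t) and its inverse D *)

Definition B_app (r s t : R) (x : nat -> C) (k : nat) : C :=
  (r * x k + s * xsh x 1 k + t * xsh x 2 k)%C.

Definition D_app (r s t : R) (z : nat -> C) (j : nat) : C :=
  csum (fun i => dmat r s t j i * z i)%C (S j).

Definition unit_seq (k : nat) (i : nat) : C := if Nat.eqb i k then 1%C else 0%C.

Section BandInverse.

Variables r s t : R.
Hypothesis Hr : r <> 0.

Lemma dseq_0 : r * dseq r s t 0 = 1.
Proof. unfold dseq. simpl. field. exact Hr. Qed.

Lemma dseq_1 : r * dseq r s t 1 + s * dseq r s t 0 = 0.
Proof. unfold dseq. simpl. field. exact Hr. Qed.

Lemma dseq_SS m : r * dseq r s t (S (S m)) + s * dseq r s t (S m) + t * dseq r s t m = 0.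
Proof.
  unfold dseq. simpl. destruct (dseq_aux r s t m) as [u v]. simpl. field. exact Hr.
Qed.

(* The coefficient of z_i in (B D z)_j, written with the convention d_{-1} = d_{-2} = 0. *)
Definition BD_coef (j i : nat) : R :=
  r * dmat r s t j i
  + s * (if Nat.leb 1 j then dmat r s t (j - 1) i else 0)
  + t * (if Nat.leb 2 j then dmat r s t (j - 2) i else 0).

Lemma BD_coef_diag (j i : nat) : (i <= j)%nat -> BD_coef j i = if Nat.eqb i j then 1 else 0.
Proof.
  intros Hij. unfold BD_coef, dmat. replace j with (i + (j - i))%nat by lia.
  generalize (j - i)%nat. clear j Hij. intros d.
  repeat match goal with
  | |- context [Nat.leb ?a ?b] => destruct (Nat.leb_spec a b); try lia
  | |- context [Nat.eqb ?a ?b] => destruct (Nat.eqb_spec a b); try lia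
  end; ring_simplify.
  all: first
    [ replace (i + d - i)%nat with (S (S (d - 2))) by lia;
      replace (i + d - 1 - i)%nat with (S (d - 2)) by lia;
      replace (i + d - 2 - i)%nat with (d - 2)%nat by lia; apply dseq_SS
    | replace (i + d - i)%nat with 1%nat by lia;
      replace (i + d - 1 - i)%nat with 0%nat by lia; apply dseq_1
    | replace (i + d - i)%nat with 0%nat by lia; apply dseq_0 ].
Qed.

Lemma D_app_wide (z : nat -> C) j M :
  (j < M)%nat -> D_app r s t z j = csum (fun i => dmat r s t j i * z i)%C M.
Proof.
  intros HjM. symmetry. apply csum_vanishing_from; [lia|].
  intros i Hi. unfold dmat. destruct (Nat.leb_spec i j); [lia|]. ring.
Qed.

Lemma xsh_D_app (z : nat -> C) h j :
  xsh (D_app r s t z) h j =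
  csum (fun i => RtoC (if Nat.leb h j then dmat r s t (j - h) i else 0) * z i)%C (S j).
Proof.
  unfold xsh. destruct (Nat.leb_spec h j).
  - apply D_app_wide. lia.
  - rewrite (csum_ext_lt _ (fun _ => RtoC 0)), csum_0; [reflexivity|]. intros; ring.
Qed.

Lemma B_app_D_app (z : nat -> C) j : B_app r s t (D_app r s t z) j = z j.
Proof.
  unfold B_app. rewrite !xsh_D_app, (D_app_wide z j (S j)) by lia.
  rewrite <- !csum_scal, <- !csum_plus.
  rewrite (csum_ext_lt _ (fun i => BD_coef j i * z i)%C).
  2:{ intros i _. unfold BD_coef. rewrite !RtoC_plus, !RtoC_mult. ring. }
  rewrite (csum_ext_lt _ (fun i => if Nat.eqb i j then z i else 0%C)).
  2:{ intros i Hi. rewrite BD_coef_diag by lia. destruct (Nat.eqb i j); ring. }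
  apply csum_single. lia.
Qed.

Lemma B_app_minus (x x' : nat -> C) k :
  B_app r s t (fun i => x i - x' i)%C k = (B_app r s t x k - B_app r s t x' k)%C.
Proof. unfold B_app, xsh. destruct (Nat.leb 1 k), (Nat.leb 2 k); ring. Qed.

Lemma B_app_kernel (w : nat -> C) : (forall k, B_app r s t w k = 0%C) -> forall j, w j = 0%C.
Proof.
  intros Hw j. induction j as [j IH] using (well_founded_induction Wf_nat.lt_wf).
  assert (Hsh : forall h, (1 <= h)%nat -> xsh w h j = 0%C).
  { intros h Hh. unfold xsh. destruct (Nat.leb_spec h j); [apply IH; lia | reflexivity]. }
  specialize (Hw j). unfold B_app in Hw. rewrite !Hsh in Hw by lia.
  assert (Hr' : RtoC r <> 0%C) by (intros E; apply Hr, RtoC_inj, E).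
  replace (w j) with (/ r * (r * w j + s * 0 + t * 0))%C by (field; exact Hr').
  rewrite Hw. ring.
Qed.

Lemma D_app_B_app (x : nat -> C) j : D_app r s t (B_app r s t x) j = x j.
Proof.
  apply Ceq_minus. revert j.
  apply (B_app_kernel (fun j => D_app r s t (B_app r s t x) j - x j)%C). intros k.
  rewrite B_app_minus, B_app_D_app. ring.
Qed.

Lemma D_app_unit k j : D_app r s t (unit_seq k) j = RtoC (dmat r s t j k).
Proof.
  unfold D_app, unit_seq. destruct (Nat.leb_spec k j).
  - rewrite (csum_ext_lt _ (fun i => if Nat.eqb i k then RtoC (dmat r s t j i) else 0%C)).
    + apply csum_single. lia.
    + intros i _. destruct (Nat.eqb i k); ring.
  - rewrite (csum_ext_lt _ (fun _ => RtoC 0)), csum_0.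
    + unfold dmat. destruct (Nat.leb_spec k j); [lia | reflexivity].
    + intros i Hi. destruct (Nat.eqb_spec i k); [lia | ring].
Qed.

End BandInverse.

(** * The transform W and its inverse *)

Definition dlam (lam : nat -> R) (k : nat) : R := lam k - lam_m1 lam k.

Definition yprev (y : nat -> C) (k : nat) : C := match k with O => 0%C | S k' => y k' end.

Definition zofy (lam : nat -> R) (y : nat -> C) (k : nat) : C :=
  (RtoC (/ dlam lam k) * (lam k * y k - yprev (fun i => lam i * y i) k))%C.

Definition xofy (r s t : R) (lam : nat -> R) (y : nat -> C) : nat -> C :=
  D_app r s t (zofy lam y).

Lemma csum_telescope (u : nat -> C) n : csum (fun k => u k - yprev u k)%C (S n) = u n.
Proof.
  induction n as [|n IH]; [simpl; ring|].
  change (csum (fun k => u k - yprev u k)%C (S n) + (u (S n) - u n) = u (S n))%C.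
  rewrite IH. ring.
Qed.

Lemma csum_by_parts (c u : nat -> C) m :
  csum (fun i => c i * (u i - yprev u i))%C (S m) =
  (csum (fun k => (c k - c (S k)) * u k)%C m + c m * u m)%C.
Proof.
  induction m as [|m IH]; [simpl; ring|].
  change (csum (fun i => c i * (u i - yprev u i))%C (S m) + c (S m) * (u (S m) - u m)
          = csum (fun k => (c k - c (S k)) * u k)%C m + (c m - c (S m)) * u m + c (S m) * u (S m))%C.
  rewrite IH. ring.
Qed.

Section Transform.

Variables (r s t : R) (lam : nat -> R).
Hypothesis Hr : r <> 0.
Hypothesis Hl : lam_ok lam.

Lemma lam_pos k : 0 < lam k.
Proof. apply Hl. Qed.

Lemma dlam_pos k : 0 < dlam lam k.
Proof.
  destruct Hl as [H0 [Hinc _]]. unfold dlam. destruct k as [|k]; simpl.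
  - specialize (H0 O). lra.
  - specialize (Hinc k). lra.
Qed.

Lemma What_B_app (x : nat -> C) n :
  What r s t lam x n = (RtoC (/ lam n) * csum (fun k => dlam lam k * B_app r s t x k)%C (S n))%C.
Proof. reflexivity. Qed.

Lemma lam_What (x : nat -> C) n :
  (lam n * What r s t lam x n)%C = csum (fun k => dlam lam k * B_app r s t x k)%C (S n).
Proof.
  rewrite What_B_app, Cmult_assoc, <- RtoC_mult, Rinv_r by (pose proof (lam_pos n); lra).
  apply Cmult_1_l.
Qed.

Lemma B_app_zofy_What (x : nat -> C) k : B_app r s t x k = zofy lam (What r s t lam x) k.
Proof.
  unfold zofy. pose proof (dlam_pos k) as Hd.
  replace (lam k * What r s t lam x k - yprev (fun i => lam i * What r s t lam x i) k)%C
    with (dlam lam k * B_app r s t x k)%C.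
  - rewrite Cmult_assoc, <- RtoC_mult, Rinv_l by lra. ring.
  - destruct k as [|k]; simpl yprev; rewrite !lam_What; [simpl; ring|].
    change (csum (fun i => dlam lam i * B_app r s t x i)%C (S (S k)))
      with (csum (fun i => dlam lam i * B_app r s t x i)%C (S k) + dlam lam (S k) * B_app r s t x (S k))%C.
    ring.
Qed.

Lemma What_xofy (y : nat -> C) n : What r s t lam (xofy r s t lam y) n = y n.
Proof.
  rewrite What_B_app.
  rewrite (csum_ext_lt _ (fun k => lam k * y k - yprev (fun i => lam i * y i) k)%C).
  - rewrite csum_telescope, Cmult_assoc, <- RtoC_mult, Rinv_l by (pose proof (lam_pos n); lra).
    ring.
  - intros k _. unfold xofy. rewrite B_app_D_app by exact Hr.
    unfold zofy. rewrite Cmult_assoc, <- RtoC_mult, Rinv_r by (pose proof (dlam_pos k); lra).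
    ring.
Qed.

Lemma xofy_What (x : nat -> C) j : xofy r s t lam (What r s t lam x) j = x j.
Proof.
  rewrite <- (D_app_B_app r s t Hr x j). unfold xofy, D_app.
  apply csum_ext_lt. intros i _. rewrite B_app_zofy_What. reflexivity.
Qed.

Lemma c0_lam_B_xofy (y : nat -> C) : c0 y -> c0_lam_B r s t lam (xofy r s t lam y).
Proof.
  intros Hy. unfold c0_lam_B. eapply is_lim_seq_ext; [|exact Hy].
  intros n. simpl. now rewrite What_xofy.
Qed.

End Transform.

(** * Summation by parts *)

Definition gdiag (r : R) (lam : nat -> R) (a : nat -> nat -> C) (n m : nat) : C :=
  (RtoC (/ r * (lam m / (lam m - lam_m1 lam m))) * a n m)%C.

(* Row m of the triangle expressing the m-th partial sum of (Ax)_n through W(x). *)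
Definition gtri (r s t : R) (lam : nat -> R) (a : nat -> nat -> C) (n m k : nat) : C :=
  if Nat.ltb k m then ghat_m r s t lam a n k m
  else if Nat.eqb k m then gdiag r lam a n m else 0%C.

Section SummationByParts.

Variables (r s t : R) (lam : nat -> R) (a : nat -> nat -> C) (n : nat).
Hypothesis Hr : r <> 0.
Hypothesis Hl : lam_ok lam.

Lemma dasum_eq_csum i m :
  (i <= m)%nat -> dasum r s t a n i m = csum (fun j => dmat r s t j i * a n j)%C (S m).
Proof.
  intros Him. replace (S m) with (i + S (m - i))%nat by lia.
  rewrite csum_vanishing_below; [reflexivity|].
  intros j Hj. unfold dmat. destruct (Nat.leb_spec i j); [lia | ring].
Qed.

Lemma dasum_diag m : dasum r s t a n m m = (RtoC (/ r) * a n m)%C.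
Proof.
  unfold dasum, dmat. rewrite Nat.sub_diag. simpl.
  rewrite Nat.add_0_r, Nat.leb_refl, Nat.sub_diag. unfold dseq. simpl. ring.
Qed.

Lemma csum_Arow_D_app (z : nat -> C) m :
  csum (Arow a (D_app r s t z) n) (S m) = csum (fun i => dasum r s t a n i m * z i)%C (S m).
Proof.
  unfold Arow. rewrite (csum_ext_lt _ (fun j => csum (fun i => a n j * (dmat r s t j i * z i)) (S m))%C).
  - rewrite csum_swap. apply csum_ext_lt. intros i Hi.
    rewrite dasum_eq_csum by lia. rewrite <- csum_scal_r. apply csum_ext_lt. intros; ring.
  - intros j Hj. rewrite (D_app_wide r s t z j (S m)) by lia. symmetry. apply csum_scal.
Qed.

Lemma partial_sum_xofy (y : nat -> C) m :
  csum (Arow a (xofy r s t lam y) n) (S m) =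
  (csum (fun k => ghat_m r s t lam a n k m * y k)%C m + gdiag r lam a n m * y m)%C.
Proof.
  unfold xofy. rewrite csum_Arow_D_app.
  set (c := fun i => (RtoC (/ dlam lam i) * dasum r s t a n i m)%C).
  rewrite (csum_ext_lt _ (fun i => c i * ((fun k => lam k * y k) i - yprev (fun k => lam k * y k) i)))%C
    by (intros; unfold c, zofy; ring).
  rewrite csum_by_parts. f_equal.
  - apply csum_ext_lt. intros k _. unfold c, ghat_m, dlam. simpl lam_m1. ring.
  - unfold c, gdiag, dlam. rewrite dasum_diag.
    unfold Rdiv. rewrite !RtoC_mult. ring.
Qed.

Lemma csum_gtri (f : nat -> C) m :
  csum (fun k => gtri r s t lam a n m k * f k)%C (S m) =
  (csum (fun k => ghat_m r s t lam a n k m * f k)%C m + gdiag r lam a n m * f m)%C.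
Proof.
  simpl. unfold gtri at 2. rewrite Nat.ltb_irrefl, Nat.eqb_refl. f_equal.
  apply csum_ext_lt. intros k Hk. unfold gtri. destruct (Nat.ltb_spec k m); [reflexivity | lia].
Qed.

Lemma rsum_gtri m :
  rsum (fun k => Cmod (gtri r s t lam a n m k)) (S m) =
  rsum (fun k => Cmod (ghat_m r s t lam a n k m)) m + Cmod (gdiag r lam a n m).
Proof.
  simpl. unfold gtri at 2. rewrite Nat.ltb_irrefl, Nat.eqb_refl. f_equal.
  apply rsum_ext_lt. intros k Hk. unfold gtri. destruct (Nat.ltb_spec k m); [reflexivity | lia].
Qed.

Lemma partial_sum_What (x : nat -> C) m :
  csum (Arow a x n) (S m) = csum (fun k => gtri r s t lam a n m k * What r s t lam x k)%C (S m).
Proof.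
  rewrite csum_gtri, <- partial_sum_xofy. unfold Arow.
  apply csum_ext_lt. intros j _. rewrite xofy_What by assumption. reflexivity.
Qed.

End SummationByParts.

(** * A Toeplitz theorem on null sequences *)

Lemma is_lim_seq_rsum (f : nat -> nat -> R) (l : nat -> R) K :
  (forall k, (k < K)%nat -> is_lim_seq (fun m => f m k) (l k)) ->
  is_lim_seq (fun m => rsum (f m) K) (rsum l K).
Proof.
  induction K as [|K IH]; intros H; simpl; [apply is_lim_seq_const|].
  apply is_lim_seq_plus'; [apply IH; intros; apply H; lia | apply H; lia].
Qed.

Lemma l1_bounded_of_lim (c : nat -> nat -> C) (g : nat -> C) M :
  (forall m, rsum (fun k => Cmod (c m k)) (S m) <= M) ->
  (forall k, is_lim_Cseq (fun m => c m k) (g k)) -> l1_bounded g M.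
Proof.
  intros HM Hc K.
  apply (is_lim_seq_le_loc (fun m => rsum (fun k => Cmod (c m k)) K) (fun _ => M)
           (rsum (fun k => Cmod (g k)) K) M).
  - exists K. intros m Hm. eapply Rle_trans; [|apply (HM m)].
    apply rsum_le_mono; [intros; apply Cmod_ge_0 | lia].
  - apply (is_lim_seq_rsum (fun m k => Cmod (c m k))). intros k _. apply is_lim_Cseq_Cmod, Hc.
  - apply is_lim_seq_const.
Qed.

Section Toeplitz.

Variables (c : nat -> nat -> C) (g : nat -> C) (M : R).
Hypothesis HM : forall m, rsum (fun k => Cmod (c m k)) (S m) <= M.
Hypothesis Hc : forall k, is_lim_Cseq (fun m => c m k) (g k).

Lemma toeplitz_tail_le (y : nat -> C) eps K m :
  (K <= S m)%nat -> (forall k, (K <= k)%nat -> Cmod (y k) <= eps) ->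
  Cmod (csum (fun k => (c m (K + k)%nat - g (K + k)%nat) * y (K + k)%nat)%C (S m - K)) <= eps * (2 * M).
Proof.
  intros HKm Hy. pose proof (Cmod_ge_0 (y K)) as Hy0. specialize (Hy K (le_n K)) as HyK.
  eapply Rle_trans; [apply Cmod_csum_le|].
  eapply Rle_trans;
    [apply (rsum_le _ (fun k => eps * (Cmod (c m (K + k)%nat) + Cmod (g (K + k)%nat))))|].
  - intros k _. rewrite Cmod_mult, Rmult_comm. apply Rmult_le_compat.
    + apply Cmod_ge_0.
    + apply Cmod_ge_0.
    + apply Hy. lia.
    + unfold Cminus. eapply Rle_trans; [apply Cmod_triangle|]. rewrite Cmod_opp. lra.
  - rewrite rsum_scal, rsum_plus. apply Rmult_le_compat_l; [lra|].
    assert (Hc' : rsum (fun k => Cmod (c m (K + k)%nat)) (S m - K) <= M).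
    { eapply Rle_trans; [|apply (HM m)]. replace (S m) with (K + (S m - K))%nat at 2 by lia.
      rewrite rsum_add. pose proof (rsum_Cmod_nonneg (c m) K). lra. }
    assert (Hg' : rsum (fun k => Cmod (g (K + k)%nat)) (S m - K) <= M).
    { eapply Rle_trans; [|apply (l1_bounded_of_lim c g M HM Hc (K + (S m - K))%nat)].
      rewrite rsum_add. pose proof (rsum_Cmod_nonneg g K). lra. }
    lra.
Qed.

Lemma toeplitz_c0 (y : nat -> C) :
  c0 y ->
  is_lim_Cseq (fun m => csum (fun k => c m k * y k)%C (S m)) (CSeries (fun k => g k * y k)%C).
Proof.
  intros Hy.
  assert (M0 : 0 <= M) by (eapply Rle_trans; [apply rsum_Cmod_nonneg | apply (HM O)]).
  pose proof (CSeries_correct _ (ex_series_mul_c0 g y M (l1_bounded_of_lim c g M HM Hc) Hy)) as HL.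
  assert (HD : is_lim_Cseq (fun m => csum (fun k => (c m k - g k) * y k)%C (S m)) 0%C).
  { intros eps Heps. set (eps' := eps / (4 * M + 1)).
    assert (Heps' : 0 < eps') by (apply Rdiv_lt_0_compat; lra).
    destruct (c0_spec y Hy eps' Heps') as [K HK].
    assert (Hhead : is_lim_Cseq (fun m => csum (fun k => (c m k - g k) * y k)%C K) 0%C).
    { rewrite <- (csum_0 K). apply (is_lim_Cseq_csum (fun m k => (c m k - g k) * y k)%C).
      intros k _. cbv beta. replace (RtoC 0) with (y k * (g k - g k))%C by ring.
      apply (is_lim_Cseq_ext (fun m => y k * (c m k - g k))%C); [intros; ring|].
      apply is_lim_Cseq_scal, is_lim_Cseq_minus; [apply Hc | apply is_lim_Cseq_const]. }
    destruct (Hhead (eps / 2)) as [N HN]; [lra|].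
    exists (N + K)%nat. intros m Hm. specialize (HN m ltac:(lia)).
    replace (S m) with (K + (S m - K))%nat by lia. rewrite csum_add.
    replace (_ + _ - 0)%C with
      (csum (fun k => (c m k - g k) * y k)%C K - 0
       + csum (fun k => (c m (K + k)%nat - g (K + k)%nat) * y (K + k)%nat)%C (S m - K))%C by ring.
    eapply Rle_lt_trans; [apply Cmod_triangle|].
    pose proof (toeplitz_tail_le y eps' K m ltac:(lia) ltac:(intros; left; apply HK; lia)) as Htail.
    assert (eps' * (2 * M) <= eps / 2).
    { unfold eps'. apply (Rmult_le_reg_r (4 * M + 1)); [lra|].
      replace (eps / (4 * M + 1) * (2 * M) * (4 * M + 1)) with (eps * (2 * M)) by (field; lra). nra. }
    lra. }
  replace (CSeries (fun k => g k * y k)%C) with (0 + CSeries (fun k => g k * y k)%C)%C by ring.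
  apply (is_lim_Cseq_ext (fun m => csum (fun k => (c m k - g k) * y k)%C (S m)
                                   + csum (fun k => g k * y k)%C (S m))%C).
  - intros m. rewrite <- csum_plus. apply csum_ext_lt. intros; ring.
  - apply is_lim_Cseq_plus; [exact HD|].
    apply (is_lim_Cseq_comp _ _ S); [intros N; exists N; intros; lia | exact HL].
Qed.

End Toeplitz.

(** * Uniform boundedness by a gliding hump *)

Lemma halving_sum_le (d : nat -> R) n J :
  (forall m, 0 <= d (S m) <= d m / 2) -> rsum (fun j => d (n + j)%nat) J <= 2 * d n - 2 * d (n + J)%nat.
Proof.
  intros H. induction J as [|J IH]; simpl; [rewrite Nat.add_0_r; lra|].
  rewrite Nat.add_succ_r. specialize (H (n + J)%nat). lra.
Qed.

Lemma halving_eventually_small (d : nat -> R) :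
  (forall m, 0 <= d (S m) <= d m / 2) -> forall eps, 0 < eps -> exists n, d n <= eps.
Proof.
  intros H eps Heps.
  assert (Hgeom : forall n, d n <= d O * (/ 2) ^ n).
  { induction n as [|n IH]; simpl; [lra|]. specialize (H n).
    replace (d O * (/ 2 * (/ 2) ^ n)) with (d O * (/ 2) ^ n / 2) by field. lra. }
  assert (Hlim : is_lim_seq (fun n => d O * (/ 2) ^ n) 0).
  { replace (Finite 0) with (Rbar_mult (d O) 0) by (simpl; f_equal; ring).
    apply is_lim_seq_scal_l, is_lim_seq_geom. rewrite Rabs_pos_eq; lra. }
  apply is_lim_seq_spec in Hlim. destruct (Hlim (mkposreal eps Heps)) as [N HN].
  exists N. specialize (HN N (le_n N)). specialize (Hgeom N). simpl in HN.
  apply Rabs_def2 in HN. lra.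
Qed.

Lemma halving_series_tail (v : nat -> C) (d : nat -> R) :
  (forall m, 0 <= d (S m) <= d m / 2) -> (forall m, Cmod (v m) <= d m) ->
  forall n, Cmod (CSeries v - csum v n)%C <= 2 * d n.
Proof.
  intros Hd Hvd n.
  assert (Hd0 : forall m, 0 <= d m) by (intros m; eapply Rle_trans; [apply Cmod_ge_0 | apply Hvd]).
  assert (Hex : ex_series v).
  { apply (ex_series_of_l1_bounded _ (2 * d O)). intros J.
    eapply Rle_trans; [apply (rsum_le _ d); intros; apply Hvd|].
    pose proof (halving_sum_le d O J Hd) as H. simpl in H.
    change (rsum (fun j => d j) J) with (rsum d J) in H. pose proof (Hd0 J). lra. }
  apply (Cmod_le_of_lim (fun J => csum v J - csum v n)%C).
  - apply is_lim_Cseq_minus; [apply CSeries_correct, Hex | apply is_lim_Cseq_const].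
  - exists n. intros J HJ. replace J with (n + (J - n))%nat by lia. rewrite csum_add.
    replace (_ + _ - _)%C with (csum (fun j => v (n + j)%nat) (J - n)) by ring.
    eapply Rle_trans; [apply Cmod_csum_le|].
    eapply Rle_trans; [apply (rsum_le _ (fun j => d (n + j)%nat)); intros; apply Hvd|].
    pose proof (halving_sum_le d n (J - n) Hd). pose proof (Hd0 (n + (J - n))%nat). lra.
Qed.

Lemma gliding_sum (v : nat -> nat -> C) (d : nat -> R) :
  (forall m, 0 <= d (S m) <= d m / 2) -> (forall n, c0 (v n)) -> (forall n k, Cmod (v n k) <= d n) ->
  c0 (fun k => CSeries (fun n => v n k)) /\
  forall n k, Cmod (CSeries (fun m => v m k) - csum (fun m => v m k) n)%C <= 2 * d n.
Proof.
  intros Hd Hv Hvd.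
  assert (Htail : forall n k, Cmod (CSeries (fun m => v m k) - csum (fun m => v m k) n)%C <= 2 * d n)
    by (intros n k; apply halving_series_tail; auto).
  split; [|exact Htail].
  apply c0_intro. intros eps Heps.
  destruct (halving_eventually_small d Hd (eps / 4)) as [n Hn]; [lra|].
  assert (Hpart : c0 (fun k => csum (fun m => v m k) n)).
  { clear Hn. induction n as [|n IH].
    - apply (c0_finite _ O). intros; reflexivity.
    - apply (c0_plus (fun k => csum (fun m => v m k) n) (v n)); [apply IH | apply Hv]. }
  destruct (c0_spec _ Hpart (eps / 2)) as [N HN]; [lra|].
  exists N. intros k Hk. specialize (HN k Hk). specialize (Htail n k).
  replace (CSeries (fun m => v m k))
    with (csum (fun m => v m k) n + (CSeries (fun m => v m k) - csum (fun m => v m k) n))%C by ring.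
  eapply Rle_trans; [apply Cmod_triangle|]. lra.
Qed.

Section GlidingHump.

Variables (I : Type) (q : I -> (nat -> C) -> R) (K : R).
Hypothesis HK : 1 <= K.
Hypothesis Hq_plus :
  forall i y z, c0 y -> c0 z -> q i (fun k => y k + z k)%C <= K * (q i y + q i z).
Hypothesis Hq_opp : forall i y, c0 y -> q i (fun k => - y k)%C = q i y.

Variable eta : I -> R.
Hypothesis Heta :
  forall i, 0 < eta i /\ forall y, c0 y -> (forall k, Cmod (y k) <= eta i) -> q i y <= 1.

Variable hump : R -> R -> I * (nat -> C).
Hypothesis Hhump : forall d T, 0 < d ->
  c0 (snd (hump d T)) /\ (forall k, Cmod (snd (hump d T) k) <= d) /\
  T < q (fst (hump d T)) (snd (hump d T)).

Lemma q_reverse_triangle i (x y : nat -> C) :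
  c0 x -> c0 y -> q i y <= K * (q i (fun k => x k + y k)%C + q i x).
Proof.
  intros Hx Hy. rewrite <- (Hq_opp i x Hx).
  replace y with (fun k => (fun k => x k + y k)%C k + (fun k => - x k)%C k)%C at 1
    by (apply functional_extensionality; intros; ring).
  apply Hq_plus; [apply c0_plus; assumption | apply c0_opp, Hx].
Qed.

Definition hump_level (n : nat) : R := 2 * K * K * (INR n + 2).

Fixpoint hump_radius (n : nat) : R :=
  match n with
  | O => 1
  | S n' => Rmin (hump_radius n' / 2) (eta (fst (hump (hump_radius n') (hump_level n'))) / 2)
  end.

Definition hump_index (n : nat) : I := fst (hump (hump_radius n) (hump_level n)).
Definition hump_vec (n : nat) : nat -> C := snd (hump (hump_radius n) (hump_level n)).

(* The n-th hump is kept only if it is not cancelled by the sum built so far. *)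
Definition hump_step (n : nat) (x : nat -> C) : nat -> C :=
  if Rle_dec (q (hump_index n) (hump_vec n) / (2 * K))
             (q (hump_index n) (fun k => x k + hump_vec n k)%C)
  then hump_vec n else fun _ => 0%C.

Fixpoint hump_sum (n : nat) : nat -> C :=
  match n with
  | O => fun _ => 0%C
  | S n' => fun k => (hump_sum n' k + hump_step n' (hump_sum n') k)%C
  end.

Lemma hump_radius_pos n : 0 < hump_radius n.
Proof.
  induction n as [|n IH]; simpl; [lra|].
  apply Rmin_pos; [lra|]. pose proof (proj1 (Heta (hump_index n))). unfold hump_index in H. lra.
Qed.

Lemma hump_radius_S n :
  0 <= hump_radius (S n) <= hump_radius n / 2 /\ hump_radius (S n) <= eta (hump_index n) / 2.
Proof.
  pose proof (hump_radius_pos (S n)). simpl in *. fold (hump_index n) in *.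
  split; [split; [lra | apply Rmin_l] | apply Rmin_r].
Qed.

Lemma hump_vec_spec n :
  c0 (hump_vec n) /\ (forall k, Cmod (hump_vec n k) <= hump_radius n) /\
  hump_level n < q (hump_index n) (hump_vec n).
Proof. apply Hhump, hump_radius_pos. Qed.

Lemma hump_step_spec n x :
  c0 (hump_step n x) /\ forall k, Cmod (hump_step n x k) <= hump_radius n.
Proof.
  destruct (hump_vec_spec n) as [Hc [Hb _]]. unfold hump_step.
  destruct (Rle_dec _ _); [auto|]. split.
  - apply (c0_finite _ O). reflexivity.
  - intros k. rewrite Cmod_0. left. apply hump_radius_pos.
Qed.

Lemma hump_sum_c0 n : c0 (hump_sum n).
Proof.
  induction n as [|n IH]; [apply (c0_finite _ O); reflexivity|].
  apply (c0_plus (hump_sum n) (hump_step n (hump_sum n))); [exact IH | apply hump_step_spec].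
Qed.

Lemma hump_sum_csum n k : hump_sum n k = csum (fun m => hump_step m (hump_sum m) k) n.
Proof. induction n as [|n IH]; simpl; [reflexivity|]. now rewrite IH. Qed.

Lemma hump_sum_large n : hump_level n / (2 * K) < q (hump_index n) (hump_sum (S n)).
Proof.
  destruct (hump_vec_spec n) as [Hc [_ Hlev]].
  apply (Rlt_le_trans _ (q (hump_index n) (hump_vec n) / (2 * K))).
  { apply Rmult_lt_compat_r; [apply Rinv_0_lt_compat; lra | exact Hlev]. }
  change (hump_sum (S n)) with (fun k => hump_sum n k + hump_step n (hump_sum n) k)%C.
  unfold hump_step. destruct (Rle_dec _ _) as [Hkeep|Hdrop]; [exact Hkeep|].
  apply Rnot_le_lt in Hdrop.
  pose proof (q_reverse_triangle (hump_index n) (hump_sum n) (hump_vec n) (hump_sum_c0 n) Hc) as Hrev.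
  replace (fun k => hump_sum n k + 0)%C with (hump_sum n)
    by (apply functional_extensionality; intros; ring).
  set (A := q (hump_index n) (hump_vec n)) in *.
  set (B := q (hump_index n) (fun k => hump_sum n k + hump_vec n k)%C) in *.
  apply (Rmult_le_reg_r (2 * K)); [lra|].
  replace (A / (2 * K) * (2 * K)) with A by (field; lra).
  apply Rmult_lt_compat_r with (r := 2 * K) in Hdrop; [|lra].
  replace (A / (2 * K) * (2 * K)) with A in Hdrop by (field; lra). nra.
Qed.

Definition hump_limit (k : nat) : C := CSeries (fun m => hump_step m (hump_sum m) k).

Lemma hump_limit_spec :
  c0 hump_limit /\ forall n k, Cmod (hump_limit k - hump_sum n k)%C <= 2 * hump_radius n.
Proof.
  destruct (gliding_sum (fun m => hump_step m (hump_sum m)) hump_radius) as [Hc Htail].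
  - intros m. apply hump_radius_S.
  - intros m. apply hump_step_spec.
  - intros m k. apply hump_step_spec.
  - split; [exact Hc|]. intros n k. rewrite hump_sum_csum. apply Htail.
Qed.

Lemma hump_limit_large n : INR n + 1 < q (hump_index n) hump_limit.
Proof.
  destruct hump_limit_spec as [Hc Htail].
  set (tail := fun k => (hump_sum (S n) k - hump_limit k)%C).
  assert (Htc : c0 tail).
  { apply (c0_plus (hump_sum (S n)) (fun k => - hump_limit k)%C); [apply hump_sum_c0 | apply c0_opp, Hc]. }
  assert (Hq_tail : q (hump_index n) tail <= 1).
  { apply (proj2 (Heta (hump_index n))); [exact Htc|]. intros k. unfold tail.
    replace (hump_sum (S n) k - hump_limit k)%C with (- (hump_limit k - hump_sum (S n) k))%C by ring.
    rewrite Cmod_opp. eapply Rle_trans; [apply Htail|]. pose proof (hump_radius_S n). lra. }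
  pose proof (Hq_plus (hump_index n) hump_limit tail Hc Htc) as Hsplit.
  replace (fun k => hump_limit k + tail k)%C with (hump_sum (S n)) in Hsplit
    by (apply functional_extensionality; intros k; unfold tail; ring).
  pose proof (hump_sum_large n) as Hlarge. unfold hump_level in Hlarge.
  replace (2 * K * K * (INR n + 2) / (2 * K)) with (K * (INR n + 2)) in Hlarge by (field; lra).
  assert (K * q (hump_index n) tail <= K * 1) by (apply Rmult_le_compat_l; lra).
  assert (Hlt : K * (INR n + 2) < K * (q (hump_index n) hump_limit + 1)) by lra.
  apply Rmult_lt_reg_l in Hlt; lra.
Qed.

End GlidingHump.

Lemma uniform_boundedness (I : Type) (q : I -> (nat -> C) -> R) (K : R) :
  1 <= K ->
  (forall i y z, c0 y -> c0 z -> q i (fun k => y k + z k)%C <= K * (q i y + q i z)) ->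
  (forall i y, c0 y -> q i (fun k => - y k)%C = q i y) ->
  (forall i, exists eta, 0 < eta /\ forall y, c0 y -> (forall k, Cmod (y k) <= eta) -> q i y <= 1) ->
  (forall y, c0 y -> exists M, forall i, q i y <= M) ->
  exists delta M, 0 < delta /\ forall i y, c0 y -> (forall k, Cmod (y k) <= delta) -> q i y <= M.
Proof.
  intros HK Hq_plus Hq_opp Hcont Hpw. apply NNPP. intros Hnot.
  assert (Hunb : forall d T, 0 < d -> exists i y, c0 y /\ (forall k, Cmod (y k) <= d) /\ T < q i y).
  { intros d T Hd. apply NNPP. intros Hno. apply Hnot. exists d, T. split; [exact Hd|].
    intros i y Hy Hyd. apply Rnot_lt_le. intros Hlt. apply Hno. exists i, y. auto. }
  destruct (Hunb 1 0 Rlt_0_1) as [i0 _].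
  assert (Hhump : forall d T, {iy : I * (nat -> C) | 0 < d ->
    c0 (snd iy) /\ (forall k, Cmod (snd iy k) <= d) /\ T < q (fst iy) (snd iy)}).
  { intros d T. apply constructive_indefinite_description. destruct (Rlt_dec 0 d) as [Hd|Hd].
    - destruct (Hunb d T Hd) as [i [y Hy]]. exists (i, y). auto.
    - exists (i0, fun _ : nat => RtoC 0). intros; lra. }
  assert (Heta : forall i, {eta : R | 0 < eta /\
    forall y, c0 y -> (forall k, Cmod (y k) <= eta) -> q i y <= 1}).
  { intros i. apply constructive_indefinite_description, Hcont. }
  set (hump := fun d T => proj1_sig (Hhump d T)).
  set (eta := fun i => proj1_sig (Heta i)).
  destruct (Hpw (hump_limit I q K eta hump)) as [M HM].
  - apply (hump_limit_spec I q K eta (fun i => proj2_sig (Heta i))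
             hump (fun d T => proj2_sig (Hhump d T))).
  - destruct (INR_unbounded M) as [n Hn].
    pose proof (hump_limit_large I q K HK Hq_plus Hq_opp eta (fun i => proj2_sig (Heta i))
                  hump (fun d T => proj2_sig (Hhump d T)) n) as Hlarge.
    specialize (HM (hump_index I K eta hump n)). lra.
Qed.

Lemma powp_Rpower x p : 0 < x -> powp x p = Rpower x p.
Proof. intros H. unfold powp. destruct (Rle_dec x 0); [lra | reflexivity]. Qed.

Lemma powp_0 p : powp 0 p = 0.
Proof. unfold powp. destruct (Rle_dec 0 0); [reflexivity | lra]. Qed.

Lemma powp_nonneg x p : 0 <= powp x p.
Proof. unfold powp. destruct (Rle_dec x 0); [lra | left; apply exp_pos]. Qed.

Lemma powp_pos x p : 0 < x -> 0 < powp x p.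
Proof. intros H. rewrite powp_Rpower by exact H. apply exp_pos. Qed.

Lemma powp_le_compat x y p : 0 <= p -> 0 <= x <= y -> powp x p <= powp y p.
Proof.
  intros Hp [[Hx|<-] Hxy].
  - rewrite !powp_Rpower by lra. apply Rle_Rpower_l; lra.
  - rewrite powp_0. apply powp_nonneg.
Qed.

Lemma powp_mult x y p : 0 <= x -> 0 <= y -> powp (x * y) p = powp x p * powp y p.
Proof.
  intros [Hx|<-] [Hy|<-]; rewrite ?Rmult_0_l, ?Rmult_0_r, ?powp_0; try ring.
  rewrite !powp_Rpower by (try apply Rmult_lt_0_compat; assumption).
  symmetry. apply Rpower_mult_distr; assumption.
Qed.

Lemma powp_le_self x p : 1 <= p -> 0 <= x <= 1 -> powp x p <= x.
Proof.
  intros Hp [[Hx|<-] Hx1]; [|rewrite powp_0; lra].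
  rewrite powp_Rpower by exact Hx. unfold Rpower.
  rewrite <- (exp_ln x) at 2 by exact Hx.
  assert (Hln : ln x <= 0) by (rewrite <- ln_1; apply ln_le; lra).
  destruct (Req_dec (p * ln x) (ln x)) as [E|E]; [rewrite E; lra|].
  left. apply exp_increasing. nra.
Qed.

Lemma powp_ge_1 x p : 1 <= x -> 0 <= p -> 1 <= powp x p.
Proof.
  intros Hx Hp. rewrite powp_Rpower by lra. rewrite <- (Rpower_O x) at 1 by lra.
  apply Rle_Rpower; assumption.
Qed.

Lemma powp_le_max2 x y p : powp (Rmax x y) p <= powp x p + powp y p.
Proof.
  unfold Rmax. pose proof (powp_nonneg x p). pose proof (powp_nonneg y p).
  destruct (Rle_dec x y); lra.
Qed.

Lemma powp_Cmod_plus (u v : C) p :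
  0 <= p -> powp (Cmod (u + v)%C) p <= powp 2 p * (powp (Cmod u) p + powp (Cmod v) p).
Proof.
  intros Hp. pose proof (Rmax_l (Cmod u) (Cmod v)). pose proof (Rmax_r (Cmod u) (Cmod v)).
  pose proof (Cmod_ge_0 u).
  eapply Rle_trans; [apply (powp_le_compat _ (2 * Rmax (Cmod u) (Cmod v))); [exact Hp|]|].
  - split; [apply Cmod_ge_0|]. eapply Rle_trans; [apply Cmod_triangle | lra].
  - rewrite powp_mult by lra. apply Rmult_le_compat_l; [apply powp_nonneg | apply powp_le_max2].
Qed.

Lemma powp_sum4_le a1 a2 a3 a4 p : 0 <= p -> 0 <= a1 -> 0 <= a2 -> 0 <= a3 -> 0 <= a4 ->
  powp (a1 + a2 + a3 + a4) p <= powp 4 p * (powp a1 p + powp a2 p + powp a3 p + powp a4 p).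
Proof.
  intros Hp H1 H2 H3 H4. set (m := Rmax (Rmax a1 a2) (Rmax a3 a4)).
  pose proof (Rmax_l a1 a2). pose proof (Rmax_r a1 a2). pose proof (Rmax_l a3 a4).
  pose proof (Rmax_r a3 a4). pose proof (Rmax_l (Rmax a1 a2) (Rmax a3 a4)).
  pose proof (Rmax_r (Rmax a1 a2) (Rmax a3 a4)).
  eapply Rle_trans; [apply (powp_le_compat _ (4 * m)); unfold m; lra|].
  rewrite powp_mult by (unfold m; lra). apply Rmult_le_compat_l; [apply powp_nonneg|].
  unfold m. eapply Rle_trans; [apply powp_le_max2|].
  pose proof (powp_le_max2 a1 a2 p). pose proof (powp_le_max2 a3 a4 p). lra.
Qed.

(* Weighted AM-GM, from the tangent line of exp at [a ln u]. *)
Lemma Rpower_le_weighted_mean u a : 0 < u -> 0 <= a <= 1 -> Rpower u a <= a * u + (1 - a).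
Proof.
  intros Hu Ha. unfold Rpower. set (L := ln u). set (m := a * L).
  assert (E1 : exp m * (1 + (L - m)) <= u).
  { rewrite <- (exp_ln u) by exact Hu. fold L.
    replace (exp L) with (exp m * exp (L - m)) by (rewrite <- exp_plus; f_equal; ring).
    apply Rmult_le_compat_l; [left; apply exp_pos | apply exp_ineq1_le]. }
  assert (E2 : exp m * (1 + (0 - m)) <= 1).
  { replace 1 with (exp m * exp (0 - m)) at 2
      by (rewrite <- exp_plus; replace (m + (0 - m)) with 0 by ring; apply exp_0).
    apply Rmult_le_compat_l; [left; apply exp_pos | apply exp_ineq1_le]. }
  assert (exp m = a * (exp m * (1 + (L - m))) + (1 - a) * (exp m * (1 + (0 - m)))) by (unfold m; ring).
  nra.
Qed.

Lemma powp_bernoulli x p : 1 <= p -> 0 <= x -> 1 + p * (x - 1) <= powp x p.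
Proof.
  intros Hp [Hx|<-]; [|rewrite powp_0; lra].
  rewrite powp_Rpower by exact Hx. set (u := Rpower x p).
  assert (Hu : 0 < u) by apply exp_pos.
  assert (Hinv : 0 <= / p <= 1).
  { split; [left; apply Rinv_0_lt_compat; lra|]. rewrite <- Rinv_1. apply Rinv_le_contravar; lra. }
  pose proof (Rpower_le_weighted_mean u (/ p) Hu Hinv) as H.
  unfold u in H. rewrite Rpower_mult, Rinv_r, Rpower_1 in H by lra. fold u in H.
  apply (Rmult_le_compat_l p) in H; [|lra].
  replace (p * (/ p * u + (1 - / p))) with (u + p - 1) in H by (field; lra). lra.
Qed.

Lemma powp_convex a b th p : 1 <= p -> 0 <= a -> 0 <= b -> 0 <= th <= 1 ->
  powp (th * a + (1 - th) * b) p <= th * powp a p + (1 - th) * powp b p.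
Proof.
  intros Hp Ha Hb Ht. set (c := th * a + (1 - th) * b).
  assert (Hc : 0 <= c) by (unfold c; nra).
  destruct Hc as [Hc|Hc].
  - rewrite (Rmult_comm th (powp a p)), (Rmult_comm (1 - th) (powp b p)).
    replace (powp a p) with (powp (c * (a / c)) p) by (f_equal; field; lra).
    replace (powp b p) with (powp (c * (b / c)) p) by (f_equal; field; lra).
    assert (Hac : 0 <= a / c) by (apply Rdiv_le_0_compat; lra).
    assert (Hbc : 0 <= b / c) by (apply Rdiv_le_0_compat; lra).
    rewrite !powp_mult by lra.
    pose proof (powp_bernoulli (a / c) p Hp Hac). pose proof (powp_bernoulli (b / c) p Hp Hbc).
    assert (th * (a / c) + (1 - th) * (b / c) = 1) by (unfold c in *; field; lra).
    pose proof (powp_nonneg c p).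
    assert (1 <= th * powp (a / c) p + (1 - th) * powp (b / c) p) by nra.
    nra.
  - rewrite <- Hc, powp_0. pose proof (powp_nonneg a p). pose proof (powp_nonneg b p). nra.
Qed.

(** * From subsets to the unit ball: condition (a) *)

Definition subset_sums_bounded (g : nat -> nat -> C) (p M : R) : Prop :=
  forall F, NoDup F -> forall N, rsum (fun n => powp (Cmod (csum_list (g n) F)) p) N <= M.

Definition lp_partial (g : nat -> nat -> C) (p : R) (N K : nat) (w : nat -> C) : R :=
  rsum (fun n => powp (Cmod (csum (fun k => g n k * w k)%C K)) p) N.

Lemma csum_list_app (f : nat -> C) l1 l2 :
  csum_list f (l1 ++ l2) = (csum_list f l1 + csum_list f l2)%C.
Proof. induction l1 as [|k l1 IH]; simpl; [ring|]. rewrite IH. ring. Qed.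

Definition is_one (u : nat -> R) (k : nat) : bool := if Req_EM_T (u k) 1 then true else false.

Lemma csum_indicator (f : nat -> C) (u : nat -> R) K :
  (forall k, (k < K)%nat -> u k = 0 \/ u k = 1) ->
  csum (fun k => f k * u k)%C K = csum_list f (filter (is_one u) (seq 0 K)).
Proof.
  induction K as [|K IH]; intros H; [reflexivity|].
  rewrite seq_S, filter_app, csum_list_app. simpl. rewrite IH by (intros; apply H; lia).
  unfold is_one. destruct (Req_EM_T (u K) 1) as [E|E]; simpl.
  - rewrite E. ring.
  - destruct (H K ltac:(lia)) as [E'|E']; [|contradiction]. rewrite E'. ring.
Qed.

Section UnitBall.

Variables (g : nat -> nat -> C) (p M : R) (N K : nat).
Hypothesis Hp : 1 <= p.
Hypothesis HM : subset_sums_bounded g p M.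

Lemma lp_partial_vertex (u : nat -> R) :
  (forall k, (k < K)%nat -> u k = 0 \/ u k = 1) -> lp_partial g p N K (fun k => RtoC (u k)) <= M.
Proof.
  intros Hu. unfold lp_partial.
  rewrite (rsum_ext_lt _ (fun n => powp (Cmod (csum_list (g n) (filter (is_one u) (seq 0 K)))) p)).
  - apply HM, NoDup_filter, seq_NoDup.
  - intros n _. rewrite csum_indicator by exact Hu. reflexivity.
Qed.

Lemma lp_partial_convex (u u0 u1 : nat -> R) th :
  0 <= th <= 1 -> (forall k, u k = (1 - th) * u0 k + th * u1 k) ->
  lp_partial g p N K (fun k => RtoC (u k)) <=
  (1 - th) * lp_partial g p N K (fun k => RtoC (u0 k)) + th * lp_partial g p N K (fun k => RtoC (u1 k)).
Proof.
  intros Ht Hu. unfold lp_partial. rewrite <- !rsum_scal, <- rsum_plus. apply rsum_le. intros n _.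
  set (A := csum (fun k => g n k * u0 k)%C K). set (B := csum (fun k => g n k * u1 k)%C K).
  replace (csum (fun k => g n k * u k)%C K) with (RtoC (1 - th) * A + RtoC th * B)%C.
  - eapply Rle_trans; [apply powp_le_compat; [lra|]|].
    + split; [apply Cmod_ge_0|]. eapply Rle_trans; [apply Cmod_triangle|].
      rewrite !Cmod_mult, !Cmod_R, !Rabs_pos_eq by lra. apply Rle_refl.
    + replace th with (1 - (1 - th)) at 2 4 by ring.
      apply powp_convex; [exact Hp | apply Cmod_ge_0 | apply Cmod_ge_0 | lra].
  - unfold A, B. rewrite <- !csum_scal, <- csum_plus. apply csum_ext_lt. intros k _.
    rewrite Hu, RtoC_plus, !RtoC_mult. ring.
Qed.

Lemma lp_partial_cube (u : nat -> R) :
  (forall k, 0 <= u k <= 1) -> lp_partial g p N K (fun k => RtoC (u k)) <= M.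
Proof.
  intros Hu.
  enough (H : forall j u, (forall k, 0 <= u k <= 1) ->
            (forall k, (j <= k < K)%nat -> u k = 0 \/ u k = 1) ->
            lp_partial g p N K (fun k => RtoC (u k)) <= M).
  { apply (H K u Hu). intros; lia. }
  clear u Hu. induction j as [|j IH]; intros u Hu Hj.
  - apply lp_partial_vertex. intros k Hk. apply Hj. lia.
  - set (u0 := fun k => if Nat.eqb k j then 0 else u k).
    set (u1 := fun k => if Nat.eqb k j then 1 else u k).
    assert (Hsplit : forall u', (forall k, k <> j -> u' k = u k) -> (u' j = 0 \/ u' j = 1) ->
                       lp_partial g p N K (fun k => RtoC (u' k)) <= M).
    { intros u' Hu' Hu'j. apply IH.
      - intros k. destruct (Nat.eq_dec k j) as [->|Hk]; [lra | rewrite Hu'; auto].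
      - intros k Hk. destruct (Nat.eq_dec k j) as [->|Hkj]; [exact Hu'j|].
        rewrite Hu' by exact Hkj. apply Hj. lia. }
    eapply Rle_trans; [apply (lp_partial_convex u u0 u1 (u j)); [apply Hu|]|].
    + intros k. unfold u0, u1. destruct (Nat.eqb_spec k j) as [->|]; ring.
    + assert (H0 : lp_partial g p N K (fun k => RtoC (u0 k)) <= M).
      { apply Hsplit; unfold u0;
          [intros k Hk; destruct (Nat.eqb_spec k j); [contradiction | reflexivity]|].
        rewrite Nat.eqb_refl. auto. }
      assert (H1 : lp_partial g p N K (fun k => RtoC (u1 k)) <= M).
      { apply Hsplit; unfold u1;
          [intros k Hk; destruct (Nat.eqb_spec k j); [contradiction | reflexivity]|].
        rewrite Nat.eqb_refl. auto. }
      pose proof (Hu j). nra.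
Qed.

Lemma lp_partial_unit_ball (w : nat -> C) :
  (forall k, Cmod (w k) <= 1) -> lp_partial g p N K w <= powp 4 p * (4 * M).
Proof.
  intros Hw.
  set (u1 := fun k => Rmax (fst (w k)) 0). set (u2 := fun k => Rmax (- fst (w k)) 0).
  set (u3 := fun k => Rmax (snd (w k)) 0). set (u4 := fun k => Rmax (- snd (w k)) 0).
  assert (Hcube : forall k, 0 <= u1 k <= 1 /\ 0 <= u2 k <= 1 /\ 0 <= u3 k <= 1 /\ 0 <= u4 k <= 1).
  { intros k. assert (Rabs (fst (w k)) <= Cmod (w k)) by apply re_le_Cmod.
    pose proof (Rabs_im_le_Cmod (w k)). specialize (Hw k).
    unfold u1, u2, u3, u4, Rmax. repeat destruct (Rle_dec _ _); split_Rabs; repeat split; lra. }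
  assert (Hdec : forall k, w k = (u1 k - u2 k + Ci * (u3 k - u4 k))%C).
  { intros k. unfold u1, u2, u3, u4, Rmax. destruct (w k) as [x y].
    apply injective_projections; simpl; repeat destruct (Rle_dec _ _); lra. }
  pose proof (lp_partial_cube u1 ltac:(intros; apply Hcube)) as B1.
  pose proof (lp_partial_cube u2 ltac:(intros; apply Hcube)) as B2.
  pose proof (lp_partial_cube u3 ltac:(intros; apply Hcube)) as B3.
  pose proof (lp_partial_cube u4 ltac:(intros; apply Hcube)) as B4.
  unfold lp_partial in *.
  apply (Rle_trans _ (powp 4 p *
     (rsum (fun n => powp (Cmod (csum (fun k => g n k * u1 k)%C K)) p) N
      + rsum (fun n => powp (Cmod (csum (fun k => g n k * u2 k)%C K)) p) N
      + rsum (fun n => powp (Cmod (csum (fun k => g n k * u3 k)%C K)) p) N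
      + rsum (fun n => powp (Cmod (csum (fun k => g n k * u4 k)%C K)) p) N)));
    [|apply Rmult_le_compat_l; [apply powp_nonneg | lra]].
  rewrite <- !rsum_plus, <- rsum_scal. apply rsum_le. intros n _.
  set (S1 := csum (fun k => g n k * u1 k)%C K). set (S2 := csum (fun k => g n k * u2 k)%C K).
  set (S3 := csum (fun k => g n k * u3 k)%C K). set (S4 := csum (fun k => g n k * u4 k)%C K).
  replace (csum (fun k => g n k * w k)%C K) with (S1 - S2 + Ci * (S3 - S4))%C.
  - eapply Rle_trans;
      [apply (powp_le_compat _ (Cmod S1 + Cmod S2 + Cmod S3 + Cmod S4)); [lra|]|].
    + split; [apply Cmod_ge_0|]. eapply Rle_trans; [apply Cmod_triangle|].
      rewrite Cmod_mult, Cmod_Ci. unfold Cminus.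
      pose proof (Cmod_triangle S1 (- S2)%C). pose proof (Cmod_triangle S3 (- S4)%C).
      rewrite Cmod_opp in *. lra.
    + apply powp_sum4_le; try apply Cmod_ge_0. lra.
  - unfold S1, S2, S3, S4. unfold Cminus.
    rewrite <- !csum_opp, <- !csum_plus, <- csum_scal, <- csum_plus.
    apply csum_ext_lt. intros k _. rewrite Hdec. ring.
Qed.

Lemma lp_partial_ball (w : nat -> C) Y :
  0 < Y -> (forall k, Cmod (w k) <= Y) -> lp_partial g p N K w <= powp Y p * (powp 4 p * (4 * M)).
Proof.
  intros HY Hw.
  replace (lp_partial g p N K w) with (powp Y p * lp_partial g p N K (fun k => RtoC (/ Y) * w k)%C).
  - apply Rmult_le_compat_l; [apply powp_nonneg|]. apply lp_partial_unit_ball. intros k.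
    rewrite Cmod_mult, Cmod_R, Rabs_pos_eq by (left; apply Rinv_0_lt_compat, HY).
    apply (Rmult_le_reg_l Y); [exact HY|]. rewrite <- Rmult_assoc, Rinv_r by lra.
    specialize (Hw k). lra.
  - unfold lp_partial. rewrite <- rsum_scal. apply rsum_ext_lt. intros n _.
    rewrite <- powp_mult by (lra || apply Cmod_ge_0). f_equal.
    replace (csum (fun k => g n k * w k)%C K)
      with (RtoC Y * csum (fun k => g n k * (RtoC (/ Y) * w k)) K)%C.
    + rewrite Cmod_mult, Cmod_R, Rabs_pos_eq by lra. reflexivity.
    + rewrite <- csum_scal. apply csum_ext_lt. intros k _.
      transitivity (RtoC (Y * / Y) * (g n k * w k))%C; [rewrite RtoC_mult; ring|].
      rewrite Rinv_r by lra. ring.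
Qed.

End UnitBall.

Definition pairing (g y : nat -> C) : C := CSeries (fun k => g k * y k)%C.

Section Pairing.

Variables (g : nat -> C) (B : R).
Hypothesis Hg : l1_bounded g B.

Lemma pairing_correct (y : nat -> C) :
  c0 y -> is_lim_Cseq (csum (fun k => g k * y k)%C) (pairing g y).
Proof. intros Hy. apply CSeries_correct, (ex_series_mul_c0 g y B Hg Hy). Qed.

Lemma pairing_plus (y z : nat -> C) :
  c0 y -> c0 z -> pairing g (fun k => y k + z k)%C = (pairing g y + pairing g z)%C.
Proof.
  intros Hy Hz. apply (is_lim_Cseq_unique (csum (fun k => g k * (y k + z k))%C)).
  - apply pairing_correct, c0_plus; assumption.
  - apply (is_lim_Cseq_ext (fun K => csum (fun k => g k * y k)%C K + csum (fun k => g k * z k)%C K)%C).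
    + intros K. rewrite <- csum_plus. apply csum_ext_lt. intros; ring.
    + apply is_lim_Cseq_plus; apply pairing_correct; assumption.
Qed.

Lemma pairing_opp (y : nat -> C) : c0 y -> pairing g (fun k => - y k)%C = (- pairing g y)%C.
Proof.
  intros Hy. apply (is_lim_Cseq_unique (csum (fun k => g k * - y k)%C)).
  - apply pairing_correct, c0_opp, Hy.
  - apply (is_lim_Cseq_ext (fun K => - csum (fun k => g k * y k)%C K)%C).
    + intros K. rewrite <- csum_opp. apply csum_ext_lt. intros; ring.
    + apply is_lim_Cseq_opp, pairing_correct, Hy.
Qed.

Lemma Cmod_pairing_le (y : nat -> C) eta :
  c0 y -> (forall k, Cmod (y k) <= eta) -> Cmod (pairing g y) <= B * eta.
Proof.
  intros Hy Heta. apply (Cmod_le_of_lim _ _ _ (pairing_correct y Hy)).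
  exists O. intros K _. apply Cmod_csum_mul_le; assumption.
Qed.

End Pairing.

Lemma pairing_finite (g y : nat -> C) N :
  (forall k, (N <= k)%nat -> (g k * y k)%C = 0%C) -> pairing g y = csum (fun k => g k * y k)%C N.
Proof. apply CSeries_finite. Qed.

Definition Csgn (c : C) : C := (Cconj c * RtoC (/ Cmod c))%C.

Lemma Cmult_Csgn (c : C) : (c * Csgn c)%C = RtoC (Cmod c).
Proof.
  unfold Csgn. destruct (Req_dec (Cmod c) 0) as [E|E].
  - apply Cmod_eq_0 in E. subst. rewrite Cmod_0. ring.
  - rewrite Cmult_assoc, <- Cmod2_conj, <- RtoC_mult. f_equal. field. exact E.
Qed.

Lemma Cmod_Csgn_le (c : C) : Cmod (Csgn c) <= 1.
Proof.
  unfold Csgn. rewrite Cmod_mult, Cmod_conj, Cmod_R. destruct (Req_dec (Cmod c) 0) as [E|E].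
  - rewrite E, Rinv_0, Rabs_R0. lra.
  - pose proof (Cmod_ge_0 c). rewrite Rabs_pos_eq by (left; apply Rinv_0_lt_compat; lra).
    rewrite Rinv_r; lra.
Qed.

(* Testing against [delta * Csgn (c k)] on [k < N] recovers the l1-norm. *)
Lemma rsum_Cmod_le_of_test (c : nat -> C) N delta B :
  0 < delta ->
  (forall y : nat -> C, (forall k, (N <= k)%nat -> y k = 0%C) -> (forall k, Cmod (y k) <= delta) ->
     Cmod (csum (fun k => c k * y k)%C N) <= B) ->
  rsum (fun k => Cmod (c k)) N <= B / delta.
Proof.
  intros Hd Htest.
  set (y := fun k => if Nat.ltb k N then (RtoC delta * Csgn (c k))%C else 0%C).
  assert (Hsupp : forall k, (N <= k)%nat -> y k = 0%C).
  { intros k Hk. unfold y. destruct (Nat.ltb_spec k N); [lia | reflexivity]. }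
  assert (Hsmall : forall k, Cmod (y k) <= delta).
  { intros k. unfold y. destruct (Nat.ltb k N).
    - rewrite Cmod_mult, Cmod_R, Rabs_pos_eq by lra.
      pose proof (Cmod_Csgn_le (c k)). pose proof (Cmod_ge_0 (Csgn (c k))). nra.
    - rewrite Cmod_0. lra. }
  specialize (Htest y Hsupp Hsmall).
  rewrite (csum_ext_lt _ (fun k => RtoC delta * RtoC (Cmod (c k)))%C) in Htest.
  - rewrite csum_scal, csum_RtoC, <- RtoC_mult, Cmod_R, Rabs_pos_eq in Htest
      by (apply Rmult_le_pos; [lra | apply rsum_Cmod_nonneg]).
    apply (Rmult_le_reg_l delta); [exact Hd|].
    replace (delta * (B / delta)) with B by (field; lra). exact Htest.
  - intros k Hk. unfold y. destruct (Nat.ltb_spec k N); [|lia].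
    rewrite <- Cmult_Csgn. ring.
Qed.

Lemma uniform_l1_bound (c : nat -> nat -> C) :
  (forall i, exists B, l1_bounded (c i) B) ->
  (forall y, c0 y -> exists M, forall i, Cmod (pairing (c i) y) <= M) ->
  exists M, forall i, l1_bounded (c i) M.
Proof.
  intros Hrows Hpw.
  assert (Hrow : forall i, {B | l1_bounded (c i) B})
    by (intros i; apply constructive_indefinite_description, Hrows).
  set (B := fun i => proj1_sig (Hrow i)).
  assert (HB : forall i, l1_bounded (c i) (B i)) by (intros i; apply (proj2_sig (Hrow i))).
  assert (HB0 : forall i, 0 <= B i) by (intros i; apply (HB i O)).
  destruct (uniform_boundedness nat (fun i y => Cmod (pairing (c i) y)) 1) as [delta [M [Hd HM]]].
  - lra.
  - intros i y z Hy Hz. rewrite (pairing_plus (c i) (B i)), Rmult_1_l by auto. apply Cmod_triangle.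
  - intros i y Hy. rewrite (pairing_opp (c i) (B i)) by auto. apply Cmod_opp.
  - intros i. exists (/ (B i + 1)). pose proof (HB0 i).
    split; [apply Rinv_0_lt_compat; lra|]. intros y Hy Hyb.
    eapply Rle_trans; [apply (Cmod_pairing_le (c i) (B i) (HB i) y _ Hy Hyb)|].
    apply (Rmult_le_reg_l (B i + 1)); [lra|].
    rewrite <- Rmult_assoc, (Rmult_comm (B i + 1)), Rmult_assoc, Rinv_r by lra.
    assert (0 < / (B i + 1)) by (apply Rinv_0_lt_compat; lra). nra.
  - exact Hpw.
  - exists (M / delta). intros i N. apply rsum_Cmod_le_of_test; [exact Hd|].
    intros y Hsupp Hyb.
    rewrite <- (pairing_finite (c i) y N) by (intros k Hk; rewrite Hsupp by exact Hk; ring).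
    apply HM; [apply (c0_finite y N Hsupp) | exact Hyb].
Qed.

Lemma eventually_forall_lt (P : nat -> nat -> Prop) N :
  (forall n, (n < N)%nat -> exists K0, forall K, (K0 <= K)%nat -> P n K) ->
  exists K0, forall n K, (n < N)%nat -> (K0 <= K)%nat -> P n K.
Proof.
  induction N as [|N IH]; intros H; [exists O; intros; lia|].
  destruct IH as [K1 H1]; [intros; apply H; lia|]. destruct (H N ltac:(lia)) as [K2 H2].
  exists (K1 + K2)%nat. intros n K Hn HK. destruct (Nat.eq_dec n N) as [->|].
  - apply H2. lia.
  - apply H1; lia.
Qed.

Lemma Cmod_lim_le_twice (u : nat -> C) l :
  is_lim_Cseq u l -> exists K0, forall K, (K0 <= K)%nat -> Cmod l <= 2 * Cmod (u K).
Proof.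
  intros H. destruct (Req_dec (Cmod l) 0) as [E|E].
  - exists O. intros K _. rewrite E. pose proof (Cmod_ge_0 (u K)). lra.
  - pose proof (Cmod_ge_0 l). apply is_lim_Cseq_Cmod, is_lim_seq_spec in H.
    destruct (H (mkposreal (Cmod l / 2) ltac:(simpl; lra))) as [K0 HK].
    exists K0. intros K HK0. specialize (HK K HK0). simpl in HK. apply Rabs_def2 in HK. lra.
Qed.

Lemma ex_series_lp_pairing (g : nat -> nat -> C) p M :
  1 <= p -> subset_sums_bounded g p M -> (forall n, exists B, l1_bounded (g n) B) ->
  forall y, c0 y -> ex_series (fun n => powp (Cmod (pairing (g n) y)) p).
Proof.
  intros Hp HM Hrows y Hy. destruct (c0_bounded y Hy) as [Y0 [HY0 HY]].
  apply (ex_series_of_bounded_rsum _ (powp 2 p * (powp (Y0 + 1) p * (powp 4 p * (4 * M)))));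
    [intros; apply powp_nonneg|].
  intros N.
  destruct (eventually_forall_lt
    (fun n K => Cmod (pairing (g n) y) <= 2 * Cmod (csum (fun k => g n k * y k)%C K)) N) as [K0 HK0].
  { intros n _. destruct (Hrows n) as [B HB]. apply Cmod_lim_le_twice, (pairing_correct _ B HB y Hy). }
  eapply Rle_trans;
    [apply (rsum_le _ (fun n => powp 2 p * powp (Cmod (csum (fun k => g n k * y k)%C K0)) p))|].
  - intros n Hn. rewrite <- powp_mult by (lra || apply Cmod_ge_0).
    apply powp_le_compat; [lra|]. split; [apply Cmod_ge_0 | apply HK0; auto].
  - rewrite rsum_scal. apply Rmult_le_compat_l; [apply powp_nonneg|].
    apply (lp_partial_ball g p M N K0 Hp HM y (Y0 + 1)); [lra|]. intros k. specialize (HY k). lra.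
Qed.

Definition indicator (F : list nat) (k : nat) : C := if in_dec Nat.eq_dec k F then 1%C else 0%C.

Lemma csum_indicator_list (g : nat -> C) F K :
  NoDup F -> (forall k, In k F -> (k < K)%nat) ->
  csum (fun k => g k * indicator F k)%C K = csum_list g F.
Proof.
  induction F as [|i F IH]; intros Hnd HF.
  - simpl. rewrite (csum_ext_lt _ (fun _ => RtoC 0)) by (intros; unfold indicator; simpl; ring).
    apply csum_0.
  - inversion Hnd as [|? ? Hi HndF]; subst. simpl.
    rewrite (csum_ext_lt _ (fun k => (if Nat.eqb k i then g k else 0) + g k * indicator F k)%C).
    + rewrite csum_plus, csum_single by (apply HF; simpl; auto).
      rewrite IH by (auto; intros; apply HF; simpl; auto). reflexivity.
    + intros k _. unfold indicator. destruct (Nat.eqb_spec k i) as [->|Hk].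
      * destruct (in_dec Nat.eq_dec i (i :: F)) as [_|Hn]; [|simpl in Hn; tauto].
        destruct (in_dec Nat.eq_dec i F); [contradiction | ring].
      * destruct (in_dec Nat.eq_dec k (i :: F)) as [Hin|Hin];
          destruct (in_dec Nat.eq_dec k F) as [Hin'|Hin']; try ring.
        -- simpl in Hin. destruct Hin; [congruence | contradiction].
        -- exfalso. apply Hin. simpl. auto.
Qed.

Lemma list_lt_bound (F : list nat) : exists K, forall k, In k F -> (k < K)%nat.
Proof.
  exists (S (list_max F)). intros k Hk.
  pose proof (proj1 (list_max_le F (list_max F)) (le_n _)) as H.
  rewrite Forall_forall in H. specialize (H k Hk). lia.
Qed.

Lemma l1_bounded_finitely_many (g : nat -> nat -> C) N :
  (forall n, exists B, l1_bounded (g n) B) ->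
  exists B, 0 <= B /\ forall n, (n < N)%nat -> l1_bounded (g n) B.
Proof.
  intros H. induction N as [|N [B [HB0 HB]]]; [exists 0; split; [lra | intros; lia]|].
  destruct (H N) as [B' HB']. exists (Rmax B B'). split; [eapply Rle_trans; [exact HB0 | apply Rmax_l]|].
  intros n Hn K. destruct (Nat.eq_dec n N) as [->|].
  - eapply Rle_trans; [apply HB' | apply Rmax_r].
  - eapply Rle_trans; [apply HB; lia | apply Rmax_l].
Qed.

Lemma lp_pairing_small (g : nat -> nat -> C) p N :
  1 <= p -> (forall n, exists B, l1_bounded (g n) B) ->
  exists eta, 0 < eta /\ forall y, c0 y -> (forall k, Cmod (y k) <= eta) ->
    rsum (fun n => powp (Cmod (pairing (g n) y)) p) N <= 1.
Proof.
  intros Hp Hrows. destruct (l1_bounded_finitely_many g N Hrows) as [B [HB0 HB]].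
  set (S := INR N * powp B p).
  assert (HS : 0 <= S) by (apply Rmult_le_pos; [apply pos_INR | apply powp_nonneg]).
  exists (Rmin 1 (/ (S + 1))). split; [apply Rmin_pos; [lra | apply Rinv_0_lt_compat; lra]|].
  intros y Hy Hyb. set (eta := Rmin 1 (/ (S + 1))) in *.
  assert (Heta : 0 < eta <= 1)
    by (split; [apply Rmin_pos; [lra | apply Rinv_0_lt_compat; lra] | apply Rmin_l]).
  eapply Rle_trans; [apply (rsum_le _ (fun _ => powp B p * eta))|].
  - intros n Hn. eapply Rle_trans.
    + apply (powp_le_compat _ (B * eta)); [lra|].
      split; [apply Cmod_ge_0 | apply (Cmod_pairing_le (g n) B); auto].
    + rewrite powp_mult by lra. apply Rmult_le_compat_l; [apply powp_nonneg|].
      apply powp_le_self; lra.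
  - rewrite rsum_const, <- Rmult_assoc. fold S.
    apply (Rle_trans _ (S * / (S + 1))); [apply Rmult_le_compat_l; [exact HS | apply Rmin_r]|].
    apply (Rmult_le_reg_r (S + 1)); [lra|]. rewrite Rmult_assoc, Rinv_l by lra. lra.
Qed.

Lemma subset_sums_bounded_of_ball (g : nat -> nat -> C) p delta M :
  0 < delta ->
  (forall N y, c0 y -> (forall k, Cmod (y k) <= delta) ->
     rsum (fun n => powp (Cmod (pairing (g n) y)) p) N <= M) ->
  subset_sums_bounded g p (M / powp delta p).
Proof.
  intros Hdelta HM F HF N.
  set (y := fun k => (RtoC delta * indicator F k)%C).
  destruct (list_lt_bound F) as [K HK].
  assert (Hsupp : forall k, (K <= k)%nat -> y k = 0%C).
  { intros k Hk. unfold y, indicator.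
    destruct (in_dec Nat.eq_dec k F) as [Hi|]; [specialize (HK k Hi); lia | ring]. }
  assert (Hyb : forall k, Cmod (y k) <= delta).
  { intros k. unfold y, indicator. rewrite Cmod_mult, Cmod_R, Rabs_pos_eq by lra.
    destruct (in_dec Nat.eq_dec k F); rewrite ?Cmod_1, ?Cmod_0; lra. }
  specialize (HM N y (c0_finite y K Hsupp) Hyb).
  rewrite (rsum_ext_lt _ (fun n => powp delta p * powp (Cmod (csum_list (g n) F)) p)) in HM.
  - rewrite rsum_scal in HM. pose proof (powp_pos delta p Hdelta).
    apply (Rmult_le_reg_l (powp delta p)); [lra|].
    replace (powp delta p * (M / powp delta p)) with M by (field; lra). exact HM.
  - intros n _. rewrite (pairing_finite _ _ K) by (intros k Hk; rewrite Hsupp by exact Hk; ring).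
    rewrite (csum_ext_lt _ (fun k => RtoC delta * (g n k * indicator F k))%C) by (intros; unfold y; ring).
    rewrite csum_scal, csum_indicator_list by assumption.
    rewrite Cmod_mult, Cmod_R, Rabs_pos_eq by lra. apply powp_mult; [lra | apply Cmod_ge_0].
Qed.

Definition truncate (f : nat -> C) (N : nat) (k : nat) : C := if Nat.ltb k N then f k else 0%C.

Lemma l1_bounded_truncate (f : nat -> C) N :
  l1_bounded (truncate f N) (rsum (fun k => Cmod (f k)) N).
Proof.
  intros K. destruct (Nat.le_gt_cases K N) as [HK|HK].
  - eapply Rle_trans; [|apply (rsum_le_mono _ K N); [intros; apply Cmod_ge_0 | exact HK]].
    apply Req_le, rsum_ext_lt. intros k Hk. unfold truncate.
    destruct (Nat.ltb_spec k N); [reflexivity | lia].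
  - replace K with (N + (K - N))%nat by lia. rewrite rsum_add.
    rewrite (rsum_ext_lt (fun k => Cmod (truncate f N (N + k)%nat)) (fun _ => 0)).
    + rewrite rsum_const, Rmult_0_r, Rplus_0_r. apply Req_le, rsum_ext_lt.
      intros k Hk. unfold truncate. destruct (Nat.ltb_spec k N); [reflexivity | lia].
    + intros k _. unfold truncate. destruct (Nat.ltb_spec (N + k) N); [lia | apply Cmod_0].
Qed.

Section Characterisation.

Variables (r s t : R) (lam : nat -> R) (a : nat -> nat -> C).
Hypothesis Hr : r <> 0.
Hypothesis Hl : lam_ok lam.

Lemma c0_lam_B_D_app_unit k : c0_lam_B r s t lam (D_app r s t (unit_seq k)).
Proof.
  unfold c0_lam_B.
  apply (is_lim_seq_le_le (fun _ => 0) _ (fun n => dlam lam k * / lam n)).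
  - intros n. split; [apply Cmod_ge_0|]. rewrite What_B_app.
    rewrite (csum_ext_lt _ (fun i => if Nat.eqb i k then RtoC (dlam lam i) else 0%C)).
    2:{ intros i _. rewrite B_app_D_app by exact Hr. unfold unit_seq. destruct (Nat.eqb i k); ring. }
    pose proof (lam_pos lam Hl n). pose proof (dlam_pos lam Hl k).
    rewrite Cmod_mult, Cmod_R, Rabs_pos_eq by (left; apply Rinv_0_lt_compat; lra).
    rewrite Rmult_comm. apply Rmult_le_compat_r; [left; apply Rinv_0_lt_compat; lra|].
    destruct (Nat.ltb_spec k (S n)).
    + rewrite csum_single by lia. rewrite Cmod_R, Rabs_pos_eq by lra. lra.
    + rewrite (csum_ext_lt _ (fun _ => RtoC 0)), csum_0, Cmod_0 by
        (intros i Hi; destruct (Nat.eqb_spec i k); [lia | reflexivity]). lra.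
  - apply is_lim_seq_const.
  - replace (Finite 0) with (Rbar_mult (dlam lam k) 0) by (simpl; f_equal; ring).
    apply is_lim_seq_scal_l. replace (Finite 0) with (Rbar_inv p_infty) by reflexivity.
    apply is_lim_seq_inv; [apply Hl | discriminate].
Qed.

Lemma cond_b_of_series :
  (forall x, c0_lam_B r s t lam x -> forall n, ex_series (Arow a x n)) -> cond_b r s t a.
Proof.
  intros HA k n. specialize (HA _ (c0_lam_B_D_app_unit k) n).
  apply CSeries_correct in HA. apply (ex_series_of_lim _ (CSeries (Arow a (D_app r s t (unit_seq k)) n))).
  apply (is_lim_Cseq_ext (fun N => csum (Arow a (D_app r s t (unit_seq k)) n) (k + N))).
  - intros N. rewrite csum_vanishing_below.
    + apply csum_ext_lt. intros i _. unfold Arow, daterm. rewrite D_app_unit by exact Hr. ring.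
    + intros j Hj. unfold Arow. rewrite D_app_unit by exact Hr. unfold dmat.
      destruct (Nat.leb_spec k j); [lia | ring].
  - apply (is_lim_Cseq_comp _ _ (fun N => k + N)%nat); [intros N; exists N; intros; lia | exact HA].
Qed.

Lemma gtri_bounded_of_series :
  (forall x, c0_lam_B r s t lam x -> forall n, ex_series (Arow a x n)) ->
  forall n, exists M, forall m, rsum (fun k => Cmod (gtri r s t lam a n m k)) (S m) <= M.
Proof.
  intros HA n.
  destruct (uniform_l1_bound (fun m => truncate (gtri r s t lam a n m) (S m))) as [M HM].
  - intros m. eexists. apply l1_bounded_truncate.
  - intros y Hy. specialize (HA _ (c0_lam_B_xofy r s t lam Hr Hl y Hy) n).
    destruct (is_lim_Cseq_bounded _ _ (CSeries_correct _ HA)) as [M HM].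
    exists M. intros m. rewrite (pairing_finite _ _ (S m)).
    + rewrite (csum_ext_lt _ (fun k => gtri r s t lam a n m k * What r s t lam (xofy r s t lam y) k)%C).
      * rewrite <- partial_sum_What by assumption. apply HM.
      * intros k Hk. unfold truncate. rewrite What_xofy by assumption.
        destruct (Nat.ltb_spec k (S m)); [reflexivity | lia].
    + intros k Hk. unfold truncate. destruct (Nat.ltb_spec k (S m)); [lia | ring].
  - exists M. intros m. eapply Rle_trans; [|apply (HM m (S m))].
    apply Req_le, rsum_ext_lt. intros k Hk. unfold truncate.
    destruct (Nat.ltb_spec k (S m)); [reflexivity | lia].
Qed.

Lemma cond_bcd_of_series :
  (forall x, c0_lam_B r s t lam x -> forall n, ex_series (Arow a x n)) ->
  cond_b r s t a /\ cond_c r s t lam a /\ cond_d r lam a.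
Proof.
  intros HA. pose proof (gtri_bounded_of_series HA) as Hrow.
  split; [apply cond_b_of_series, HA|].
  split; intros n; destruct (Hrow n) as [M HM]; exists M; intros m; specialize (HM m);
    rewrite rsum_gtri in HM.
  - pose proof (Cmod_ge_0 (gdiag r lam a n m)). lra.
  - pose proof (rsum_Cmod_nonneg (fun k => ghat_m r s t lam a n k m) m). unfold gdiag in HM. lra.
Qed.

Section ConditionsBCD.

Hypothesis Hb : cond_b r s t a.
Hypothesis Hc : cond_c r s t lam a.
Hypothesis Hd : cond_d r lam a.

Lemma gtri_lim n k : is_lim_Cseq (fun m => gtri r s t lam a n m k) (ghat r s t lam a n k).
Proof.
  assert (Hdasum : forall j, is_lim_Cseq (fun m => dasum r s t a n j m) (CSeries (daterm r s t a n j))).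
  { intros j. apply (is_lim_Cseq_comp (csum (daterm r s t a n j)) _ (fun m => S (m - j))).
    - intros N. exists (N + j)%nat. intros; lia.
    - apply CSeries_correct, Hb. }
  apply (is_lim_Cseq_ext_eventually (fun m => ghat_m r s t lam a n k m)).
  - exists (S k). intros m Hm. unfold gtri. destruct (Nat.ltb_spec k m); [reflexivity | lia].
  - apply is_lim_Cseq_scal, is_lim_Cseq_minus; apply is_lim_Cseq_scal, Hdasum.
Qed.

Lemma gtri_rows_bounded n : exists M, forall m, rsum (fun k => Cmod (gtri r s t lam a n m k)) (S m) <= M.
Proof.
  destruct (Hc n) as [Mc HMc]. destruct (Hd n) as [Md HMd]. exists (Mc + Md). intros m.
  rewrite rsum_gtri. specialize (HMc m). specialize (HMd m). unfold gdiag. lra.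
Qed.

Lemma ghat_l1_bounded n : exists B, l1_bounded (ghat r s t lam a n) B.
Proof.
  destruct (gtri_rows_bounded n) as [M HM]. exists M.
  exact (l1_bounded_of_lim _ _ M HM (gtri_lim n)).
Qed.

Lemma Arow_lim_pairing x n :
  c0_lam_B r s t lam x ->
  is_lim_Cseq (csum (Arow a x n)) (pairing (ghat r s t lam a n) (What r s t lam x)).
Proof.
  intros Hx. destruct (gtri_rows_bounded n) as [M HM].
  pose proof (toeplitz_c0 _ _ M HM (gtri_lim n) (What r s t lam x) Hx) as HT.
  apply (is_lim_Cseq_ext_eventually (fun N => csum (Arow a x n) (S (N - 1)))).
  - exists 1%nat. intros N HN. f_equal. lia.
  - apply (is_lim_Cseq_comp (fun m => csum (Arow a x n) (S m)) _ (fun N => (N - 1)%nat)).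
    + intros N. exists (S N). intros; lia.
    + apply (is_lim_Cseq_ext _ _ _ (fun m => eq_sym (partial_sum_What r s t lam a n Hr Hl x m)) HT).
Qed.

Lemma Ax_pairing x n :
  c0_lam_B r s t lam x -> Ax a x n = pairing (ghat r s t lam a n) (What r s t lam x).
Proof. intros Hx. apply CSeries_unique, Arow_lim_pairing, Hx. Qed.

Lemma Ax_xofy y n : c0 y -> Ax a (xofy r s t lam y) n = pairing (ghat r s t lam a n) y.
Proof.
  intros Hy. rewrite Ax_pairing by (apply c0_lam_B_xofy; assumption). f_equal.
  apply functional_extensionality. intros k. apply What_xofy; assumption.
Qed.

Lemma cond_a_of_maps_lp p :
  1 < p -> (forall x, c0_lam_B r s t lam x -> in_lp p (Ax a x)) -> cond_a r s t lam a p.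
Proof.
  intros Hp HA.
  set (q := fun (N : nat) (y : nat -> C) =>
              rsum (fun n => powp (Cmod (pairing (ghat r s t lam a n) y)) p) N).
  destruct (uniform_boundedness nat q (powp 2 p)) as [delta [M [Hdelta HM]]].
  - apply powp_ge_1; lra.
  - intros N y z Hy Hz. unfold q. rewrite <- rsum_plus, <- rsum_scal. apply rsum_le. intros n _.
    destruct (ghat_l1_bounded n) as [B HB]. rewrite (pairing_plus _ B HB) by assumption.
    apply powp_Cmod_plus. lra.
  - intros N y Hy. unfold q. apply rsum_ext_lt. intros n _.
    destruct (ghat_l1_bounded n) as [B HB]. rewrite (pairing_opp _ B HB), Cmod_opp by assumption.
    reflexivity.
  - intros N. apply lp_pairing_small; [lra | exact ghat_l1_bounded].
  - intros y Hy. pose proof (HA _ (c0_lam_B_xofy r s t lam Hr Hl y Hy)) as Hlp.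
    exists (Series (fun n => powp (Cmod (Ax a (xofy r s t lam y) n)) p)). intros N. unfold q.
    rewrite (rsum_ext_lt _ (fun n => powp (Cmod (Ax a (xofy r s t lam y) n)) p))
      by (intros n _; rewrite Ax_xofy by exact Hy; reflexivity).
    apply rsum_le_Series; [intros; apply powp_nonneg | exact Hlp].
  - exists (M / powp delta p). apply subset_sums_bounded_of_ball; assumption.
Qed.

Lemma cond_e_of_maps_linf :
  (forall x, c0_lam_B r s t lam x -> in_linf (Ax a x)) -> cond_e r s t lam a.
Proof.
  intros HA. destruct (uniform_l1_bound (ghat r s t lam a)) as [M HM].
  - exact ghat_l1_bounded.
  - intros y Hy. destruct (HA _ (c0_lam_B_xofy r s t lam Hr Hl y Hy)) as [M HM].
    exists M. intros n. rewrite <- Ax_xofy by exact Hy. apply HM.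
  - exists M. exact HM.
Qed.

Lemma maps_lp_of_conds p :
  1 < p -> cond_a r s t lam a p -> maps_c0lamB_to r s t lam a (in_lp p).
Proof.
  intros Hp [M Ha] x Hx. split.
  - intros n. eapply ex_series_of_lim, Arow_lim_pairing, Hx.
  - unfold in_lp.
    apply (ex_series_ext (fun n => powp (Cmod (pairing (ghat r s t lam a n) (What r s t lam x))) p)).
    + intros n. rewrite Ax_pairing by exact Hx. reflexivity.
    + apply (ex_series_lp_pairing _ p M); [lra | exact Ha | exact ghat_l1_bounded | exact Hx].
Qed.

Lemma maps_linf_of_conds : cond_e r s t lam a -> maps_c0lamB_to r s t lam a in_linf.
Proof.
  intros [Me HMe] x Hx. split.
  - intros n. eapply ex_series_of_lim, Arow_lim_pairing, Hx.
  - destruct (c0_bounded _ Hx) as [Y [HY0 HY]]. exists (Me * Y). intros n.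
    rewrite Ax_pairing by exact Hx. apply (Cmod_pairing_le _ Me (HMe n)); [exact Hx | exact HY].
Qed.

End ConditionsBCD.

End Characterisation.

Theorem theorem13 (r s t : R) (lam : nat -> R) (a : nat -> nat -> C) (p : R) :
  r <> 0 -> s <> 0 -> t <> 0 -> lam_ok lam -> 1 < p ->
  (maps_c0lamB_to r s t lam a (in_lp p) <->
     cond_a r s t lam a p /\ cond_b r s t a /\ cond_c r s t lam a /\ cond_d r lam a) /\
  (maps_c0lamB_to r s t lam a in_linf <->
     cond_c r s t lam a /\ cond_d r lam a /\ (cond_b r s t a /\ cond_e r s t lam a)).
Proof.
  intros Hr _ _ Hl Hp. split; split.
  - intros HA.
    destruct (cond_bcd_of_series r s t lam a Hr Hl (fun x Hx => proj1 (HA x Hx))) as [Hb [Hc Hd]].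
    repeat split; try assumption.
    apply (cond_a_of_maps_lp r s t lam a Hr Hl Hb Hc Hd p Hp). intros x Hx. apply HA, Hx.
  - intros [Ha [Hb [Hc Hd]]]. apply (maps_lp_of_conds r s t lam a Hr Hl Hb Hc Hd p Hp Ha).
  - intros HA.
    destruct (cond_bcd_of_series r s t lam a Hr Hl (fun x Hx => proj1 (HA x Hx))) as [Hb [Hc Hd]].
    repeat split; try assumption.
    apply (cond_e_of_maps_linf r s t lam a Hr Hl Hb Hc Hd). intros x Hx. apply HA, Hx.
  - intros [Hc [Hd [Hb He]]]. apply (maps_linf_of_conds r s t lam a Hr Hl Hb Hc Hd He).
Qed.
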